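(* The calculus $\lambda j/{\tt obox}$ enjoys PSN: every $\lambda$-term that is $\beta$-strongly normalizing is strongly normalizing for $\to_{\lambda j/{\tt obox}}$.
   Context: $\lambda j$-terms are generated by $t,u::= x\mid \lambda x.t\mid t\,u\mid t[x/u]$; $\lambda x.t$ and $t[x/u]$ bind $x$ in $t$ (not in $u$), and terms are considered modulo $\alpha$-conversion. $\lambda$-terms are those without jumps. $\mathrm{fv}(t)$ is the set of free variables, $t\{x/u\}$ is capture-avoiding meta-level substitution, and $|t|_x$ is the number of free occurrences of $x$ in $t$. If $|t|_x=n\ge2$, $t_{[y]_x}$ denotes any term obtained from $t$ by replacing $k$ of the free occurrences of $x$ by a fresh variable $y$, for some $1\le k\le n-1$. ${\tt L}$ denotes a (possibly empty) list of jumps $[x_1/u_1]\dots[x_k/u_k]$. The rewriting rules, closed under all contexts, are: $({\tt dB})$ $(\lambda x.t){\tt L}\,u\to t[x/u]{\tt L}$ where no $x_i$ of ${\tt L}$ is free in $u$; $({\tt w})$ $t[x/u]\to t$ if $|t|_x=0$; $({\tt d})$ $t[x/u]\to t\{x/u\}$ if $|t|_x=1$; $({\tt c})$ $t[x/u]\to t_{[y]_x}[x/u][y/u]$ if $|t|_x\ge2$, $y$ fresh. $\to_{\lambda j}$ is the union of all four. The substitution equivalence $\equiv_{\tt obox}$ is the smallest equivalence closed under contexts containing: $t[x/s][y/v]\sim t[y/v][x/s]$ if $x\notin\mathrm{fv}(v)$ and $y\notin\mathrm{fv}(s)$; $\lambda y.(t[x/s])\sim(\lambda y.t)[x/s]$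 if $y\notin\mathrm{fv}(s)$; $t[x/s]\,v\sim(t\,v)[x/s]$ if $x\notin\mathrm{fv}(v)$; $(t\,v)[x/u]\sim t\,(v[x/u])$ if $x\notin\mathrm{fv}(t)$ and $x\in\mathrm{fv}(v)$; $t[y/v][x/u]\sim t[y/v[x/u]]$ if $x\notin\mathrm{fv}(t)$ and $x\in\mathrm{fv}(v)$. $t\to_{\lambda j/{\tt obox}}u$ iff $t\equiv_{\tt obox}t'\to_{\lambda j}u'\equiv_{\tt obox}u$ for some $t',u'$. $\beta$-reduction is the contextual closure of $(\lambda x.t)u\to t\{x/u\}$. *)

(* lambda-j terms modulo alpha-conversion, represented with
   de Bruijn indices (alpha-equivalence classes = de Bruijn terms). *)
From Stdlib Require Import Arith List Relations.
Import ListNotations.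

(* t ::= x | \x.t | t u | t[x/u] ;  in [Sub t u] the body t binds index 0,
   u is not under the binder. *)
Inductive term : Type :=
| Var : nat -> term
| Lam : term -> term
| App : term -> term -> term
| Sub : term -> term -> term.

(* lambda-terms: no jumps *)
Fixpoint pure (t : term) : Prop :=
  match t with
  | Var _ => True
  | Lam t => pure t
  | App t u => pure t /\ pure u
  | Sub _ _ => False
  end.

Fixpoint lift (k c : nat) (t : term) : term :=
  match t with
  | Var n => if n <? c then Var n else Var (n + k)
  | Lam t => Lam (lift k (S c) t)
  | App t u => App (lift k c t) (lift k c u)
  | Sub t u => Sub (lift k (S c) t) (lift k c u)
  end.

(* capture-avoiding meta-level substitution of u for index c (removing
   the binder of c) *)
Fixpoint subst (c : nat) (u : term) (t : term) : term :=
  match t with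
  | Var n => if n =? c then lift c 0 u
             else if c <? n then Var (n - 1) else Var n
  | Lam t => Lam (subst (S c) u t)
  | App t v => App (subst c u t) (subst c u v)
  | Sub t v => Sub (subst (S c) u t) (subst c u v)
  end.

(* t{x/u} where x is the variable bound at index 0 *)
Definition subst0 (u t : term) : term := subst 0 u t.

Fixpoint occ (c : nat) (t : term) : nat :=
  match t with
  | Var n => if n =? c then 1 else 0
  | Lam t => occ (S c) t
  | App t u => occ c t + occ c u
  | Sub t u => occ (S c) t + occ c u
  end.

Fixpoint swap (c : nat) (t : term) : term :=
  match t with
  | Var n => if n =? c then Var (S c) else if n =? S c then Var c else Var n
  | Lam t => Lam (swap (S c) t)
  | App t u => App (swap c t) (swap c u)
  | Sub t u => Sub (swap (S c) t) (swap c u)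
  end.

(* renaming of some occurrences: [rename_some c t t'] holds iff t' is
   obtained from t by inserting a fresh variable y at index c+1 (so free
   indices > c are shifted by one) and replacing an arbitrary subset of the
   free occurrences of x (index c) by y. *)
Inductive rename_some : nat -> term -> term -> Prop :=
| rs_x_keep : forall c, rename_some c (Var c) (Var c)
| rs_x_ren  : forall c, rename_some c (Var c) (Var (S c))
| rs_lt : forall c n, n < c -> rename_some c (Var n) (Var n)
| rs_gt : forall c n, c < n -> rename_some c (Var n) (Var (S n))
| rs_lam : forall c t t', rename_some (S c) t t' ->
    rename_some c (Lam t) (Lam t')
| rs_app : forall c t t' u u', rename_some c t t' -> rename_some c u u' ->
    rename_some c (App t u) (App t' u')
| rs_sub : forall c t t' u u', rename_some (S c) t t' -> rename_some c u u' ->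
    rename_some c (Sub t u) (Sub t' u').

(* t L  where L = [u1; ...; uk] gives t[x1/u1]...[xk/uk] *)
Fixpoint jumps (t : term) (L : list term) : term :=
  match L with
  | [] => t
  | u :: L' => jumps (Sub t u) L'
  end.

Inductive lj_root : term -> term -> Prop :=
| r_dB : forall t L u,
    lj_root (App (jumps (Lam t) L) u)
            (jumps (Sub t (lift (length L) 0 u)) L)
| r_w : forall t u, occ 0 t = 0 -> lj_root (Sub t u) (subst0 u t)
| r_d : forall t u, occ 0 t = 1 -> lj_root (Sub t u) (subst0 u t)
| r_c : forall t t' u,
    occ 0 t >= 2 ->
    rename_some 0 t t' ->
    occ 0 t' >= 1 -> occ 1 t' >= 1 ->   (* 1 <= k <= n-1 occurrences renamed *)
    (* t_{[y]_x}[x/u][y/u] : outer binder y (index 1 in t'), inner x *)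
    lj_root (Sub t u) (Sub (Sub t' (lift 1 0 u)) u).

Inductive ctx (R : term -> term -> Prop) : term -> term -> Prop :=
| c_root : forall t u, R t u -> ctx R t u
| c_lam : forall t t', ctx R t t' -> ctx R (Lam t) (Lam t')
| c_appl : forall t t' u, ctx R t t' -> ctx R (App t u) (App t' u)
| c_appr : forall t u u', ctx R u u' -> ctx R (App t u) (App t u')
| c_subl : forall t t' u, ctx R t t' -> ctx R (Sub t u) (Sub t' u)
| c_subr : forall t u u', ctx R u u' -> ctx R (Sub t u) (Sub t u').

Definition lj_step : term -> term -> Prop := ctx lj_root.

Inductive obox_ax : term -> term -> Prop :=
(* t[x/s][y/v] ~ t[y/v][x/s], y notin fv(s) *)
| ob_comm : forall t s v,
    obox_ax (Sub (Sub t (lift 1 0 s)) v) (Sub (Sub (swap 0 t) (lift 1 0 v)) s)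
(* \y.(t[x/s]) ~ (\y.t)[x/s], y notin fv(s) *)
| ob_lam : forall t s,
    obox_ax (Lam (Sub t (lift 1 0 s))) (Sub (Lam (swap 0 t)) s)
(* t[x/s] v ~ (t v)[x/s] *)
| ob_appl : forall t s v,
    obox_ax (App (Sub t s) v) (Sub (App t (lift 1 0 v)) s)
(* (t v)[x/u] ~ t (v[x/u]), x notin fv(t), x in fv(v) *)
| ob_appr : forall t v u, occ 0 v >= 1 ->
    obox_ax (Sub (App (lift 1 0 t) v) u) (App t (Sub v u))
(* t[y/v][x/u] ~ t[y/v[x/u]], x notin fv(t), x in fv(v) *)
| ob_box : forall t v u, occ 0 v >= 1 ->
    obox_ax (Sub (Sub (lift 1 1 t) v) u) (Sub t (Sub v u)).

Definition obox_eq : term -> term -> Prop :=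
  clos_refl_sym_trans term (ctx obox_ax).

Definition lj_obox (t u : term) : Prop :=
  exists t' u', obox_eq t t' /\ lj_step t' u' /\ obox_eq u' u.

Inductive beta_root : term -> term -> Prop :=
| b_beta : forall t u, beta_root (App (Lam t) u) (subst0 u t).
Definition beta : term -> term -> Prop := ctx beta_root.

Definition SN (R : term -> term -> Prop) (t : term) : Prop :=
  Acc (fun u v => R v u) t.


From Stdlib Require Import Arith List Lia Permutation.

Import ListNotations.

(* The proof is quantitative.  We use non-idempotent intersection types:
   an arrow type takes a multiset (a list up to permutation) of argument
   types, contexts assign such multisets to variables, and every derivation
   carries its size.  Four facts are established.
   (1) Every pure beta-strongly-normalising term is typable: by induction on
       beta-SN, using the anti-substitution lemma (subject expansion).
   (2) The rules dB, w and d strictly decrease the size of a typing, while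
       c preserves it (subject reduction, proved via the substitution lemma
       for w and d).
   (3) obox-equivalent terms have exactly the same typings.
   (4) A purely syntactic jump weight, summing 3^(multiplicity) over all
       jumps, strictly decreases along c and is invariant under obox.
   Hence a typable term is lj/obox-strongly normalising, by lexicographic
   induction on (typing size, jump weight); PSN follows from (1). *)

Ltac nat_cases := repeat match goal with
 | |- context [?a <? ?b] => let E := fresh "E" in destruct (Nat.ltb_spec a b) as [E|E]
 | |- context [?a =? ?b] => let E := fresh "E" in destruct (Nat.eqb_spec a b) as [E|E]
 | H : context [?a <? ?b] |- _ => let E := fresh "E" in destruct (Nat.ltb_spec a b) as [E|E]
 | H : context [?a =? ?b] |- _ => let E := fresh "E" in destruct (Nat.eqb_spec a b) as [E|E]
 end.

Ltac nat_solve := nat_cases; try subst; simpl; try reflexivity; try (exfalso; lia); try (f_equal; lia); try lia.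

(* Renamings: [ren r t] renames the free indices of t by r, lifting r under
   binders with [upren].  Shifts and swaps are renamings. *)
Definition upren (r : nat -> nat) (x : nat) := match x with 0 => 0 | S y => S (r y) end.

Fixpoint ren (r : nat -> nat) (t : term) : term :=
  match t with
  | Var n => Var (r n)
  | Lam t => Lam (ren (upren r) t)
  | App t u => App (ren r t) (ren r u)
  | Sub t u => Sub (ren (upren r) t) (ren r u)
  end.

Lemma ren_ext : forall t r r', (forall x, r x = r' x) -> ren r t = ren r' t.
Proof.
  induction t as [n|t IH|t1 IH1 t2 IH2|t1 IH1 t2 IH2]; intros r r' H; simpl; f_equal; auto.
  - apply IH; intros [|x]; simpl; auto.
  - apply IH1; intros [|x]; simpl; auto.
Qed.

Definition liftf (k c : nat) (n : nat) := if n <? c then n else n + k.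

Lemma lift_ren : forall t k c, lift k c t = ren (liftf k c) t.
Proof.
  induction t; intros k c; simpl; auto.
  - unfold liftf; nat_solve.
  - f_equal. rewrite IHt. apply ren_ext. intros [|x]; unfold liftf, upren; simpl; auto; nat_solve.
  - f_equal; auto.
  - f_equal; auto. rewrite IHt1. apply ren_ext. intros [|x]; unfold liftf, upren; simpl; auto; nat_solve.
Qed.

Definition swapf (c n : nat) := if n =? c then S c else if n =? S c then c else n.

Lemma swap_ren : forall t c, swap c t = ren (swapf c) t.
Proof.
  induction t; intros c; simpl; auto.
  - unfold swapf; nat_solve.
  - f_equal. rewrite IHt. apply ren_ext. intros [|x]; unfold swapf, upren; simpl; auto; nat_solve.
  - f_equal; auto.
  - f_equal; auto. rewrite IHt1. apply ren_ext. intros [|x]; unfold swapf, upren; simpl; auto; nat_solve.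
Qed.

Lemma ren_comp : forall t r s, ren r (ren s t) = ren (fun x => r (s x)) t.
Proof.
  induction t as [n|t IH|t1 IH1 t2 IH2|t1 IH1 t2 IH2]; intros r s; simpl; f_equal; auto.
  - rewrite IH; apply ren_ext; intros [|x]; simpl; auto.
  - rewrite IH1; apply ren_ext; intros [|x]; simpl; auto.
Qed.

Lemma ren_id : forall t r, (forall x, r x = x) -> ren r t = t.
Proof.
  induction t as [n|t IH|t1 IH1 t2 IH2|t1 IH1 t2 IH2]; intros r H; simpl; f_equal; auto.
  - apply IH; intros [|x]; simpl; auto.
  - apply IH1; intros [|x]; simpl; auto.
Qed.

Lemma lift0 : forall t c, lift 0 c t = t.
Proof. intros. rewrite lift_ren. apply ren_id. intros; unfold liftf; nat_solve. Qed.

Lemma lift_lift1 : forall t k, lift k 0 (lift 1 0 t) = lift (S k) 0 t.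
Proof.
  intros. rewrite !lift_ren, ren_comp. apply ren_ext. intros; unfold liftf; nat_solve.
Qed.

Lemma swap_swap : forall t, swap 0 (swap 0 t) = t.
Proof.
  intros. rewrite !swap_ren, ren_comp. apply ren_id. intros x; unfold swapf; nat_solve.
Qed.

Lemma pure_ren : forall t r, pure t -> pure (ren r t).
Proof. induction t; simpl; intuition. Qed.

Lemma pure_lift : forall t k c, pure t -> pure (lift k c t).
Proof. intros; rewrite lift_ren; apply pure_ren; auto. Qed.

Lemma pure_subst : forall t c u, pure t -> pure u -> pure (subst c u t).
Proof.
  induction t; simpl; intros; intuition.
  destruct (n =? c). apply pure_lift; auto. destruct (c <? n); simpl; auto.
Qed.

Definition isinv (r : nat -> nat) (ri : nat -> option nat) :=
  (forall x, ri (r x) = Some x) /\ (forall y x, ri y = Some x -> r x = y).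

Definition upinv (ri : nat -> option nat) (y : nat) :=
  match y with 0 => Some 0 | S y => option_map S (ri y) end.

Lemma isinv_up : forall r ri, isinv r ri -> isinv (upren r) (upinv ri).
Proof.
  intros r ri [H1 H2]; split.
  - intros [|x]; simpl; auto. rewrite H1; auto.
  - intros [|y] x; simpl.
    + intro E; inversion E; auto.
    + destruct (ri y) eqn:E; simpl; intro E'; inversion E'; subst; simpl.
      f_equal; auto. 
Qed.

Definition liftinv (k c y : nat) : option nat :=
  if y <? c then Some y else if y <? c + k then None else Some (y - k).

Lemma isinv_lift : forall k c, isinv (liftf k c) (liftinv k c).
Proof.
  intros k c; split; intros; unfold liftf, liftinv in *; nat_solve; try congruence;
  inversion H; subst; nat_solve.
Qed.

Definition swapinv (c y : nat) := Some (swapf c y).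

Lemma isinv_swap : forall c, isinv (swapf c) (swapinv c).
Proof.
  intros c; split; intros; unfold swapinv, swapf in *; nat_solve; try congruence;
  inversion H; subst; nat_solve.
Qed.

(* The contraction measure.  [wocc c t] counts the occurrences of index c
   in t, where the occurrences inside the argument u of a jump t'[y/u] are
   counted as many times as y occurs in t' (at least once): this is the
   number of occurrences of c after all jumps are executed.  [jweight f t]
   sums 3^(f * multiplicity) over the jumps of t, f being the multiplicity
   of the surrounding context.  Both are invariant under injective
   renamings; c preserves [wocc] and decreases [jweight], because
   3^a + 3^b < 3^(a+b) when a, b >= 1. *)

(* The multiplicity of a jump whose variable does not occur is taken to be
   1: its argument is still accounted for once. *)
Definition atleast1 (n : nat) := Nat.max 1 n.

Arguments atleast1 : simpl never.

Lemma atleast1_ge1 : forall n, 1 <= atleast1 n.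
Proof. intros; unfold atleast1; lia. Qed.

Lemma atleast1_id : forall n, 1 <= n -> atleast1 n = n.
Proof. intros; unfold atleast1; lia. Qed.

Fixpoint wocc (c : nat) (t : term) : nat :=
  match t with
  | Var n => if n =? c then 1 else 0
  | Lam t => wocc (S c) t
  | App t u => wocc c t + wocc c u
  | Sub t u => wocc (S c) t + atleast1 (wocc 0 t) * wocc c u
  end.

Fixpoint jweight (f : nat) (t : term) : nat :=
  match t with
  | Var _ => 0
  | Lam t => jweight f t
  | App t u => jweight f t + jweight f u
  | Sub t u => jweight f t + jweight (f * atleast1 (wocc 0 t)) u + 3 ^ (f * atleast1 (wocc 0 t))
  end.

Lemma wocc_ren : forall t r ri y, isinv r ri ->
  wocc y (ren r t) = match ri y with Some x => wocc x t | None => 0 end.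
Proof.
  induction t as [n|t IH|t1 IH1 t2 IH2|t1 IH1 t2 IH2]; intros r ri y Hi; simpl.
  - destruct Hi as [H1 H2]. destruct (ri y) eqn:E.
    + apply H2 in E. subst. nat_cases; auto.
      * exfalso. assert (Hx : ri (r n) = ri (r n0)) by congruence. rewrite !H1 in Hx. congruence.
      * congruence.
    + nat_cases; auto. subst. rewrite H1 in E. discriminate.
  - rewrite (IH _ (upinv ri)); [|apply isinv_up; auto]. simpl. destruct (ri y); auto.
  - rewrite (IH1 _ ri), (IH2 _ ri); auto. destruct (ri y); auto.
  - rewrite (IH1 _ (upinv ri) (S y)), (IH1 _ (upinv ri) 0), (IH2 _ ri); try apply isinv_up; auto. simpl.
    destruct (ri y); simpl; auto.
Qed.

Lemma jweight_ren : forall t r ri f, isinv r ri -> jweight f (ren r t) = jweight f t.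
Proof.
  induction t as [n|t IH|t1 IH1 t2 IH2|t1 IH1 t2 IH2]; intros r ri f Hi; simpl; auto.
  - eauto using isinv_up.
  - erewrite IH1, IH2; eauto.
  - rewrite (wocc_ren _ _ (upinv ri)); [|apply isinv_up; auto]. simpl.
    erewrite IH1, IH2; eauto using isinv_up.
Qed.

Lemma jweight_lift : forall t k c f, jweight f (lift k c t) = jweight f t.
Proof. intros; rewrite lift_ren; eapply jweight_ren, isinv_lift. Qed.

Lemma jweight_swap : forall t c f, jweight f (swap c t) = jweight f t.
Proof. intros; rewrite swap_ren; eapply jweight_ren, isinv_swap. Qed.

Lemma wocc_lift : forall t k c y, wocc y (lift k c t) = match liftinv k c y with Some x => wocc x t | None => 0 end.
Proof. intros; rewrite lift_ren; eapply wocc_ren, isinv_lift. Qed.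

Lemma wocc_swap : forall t c y, wocc y (swap c t) = wocc (swapf c y) t.
Proof. intros; rewrite swap_ren; erewrite wocc_ren by apply isinv_swap. reflexivity. Qed.

Lemma wocc_lift10 : forall t y, wocc (S y) (lift 1 0 t) = wocc y t.
Proof. intros; rewrite wocc_lift; unfold liftinv; simpl. f_equal; lia. Qed.

Lemma wocc_lift10_0 : forall t, wocc 0 (lift 1 0 t) = 0.
Proof. intros; rewrite wocc_lift; unfold liftinv; simpl. reflexivity. Qed.

Lemma occ_le_wocc : forall t c, occ c t <= wocc c t.
Proof.
  induction t as [n|t IH|t1 IH1 t2 IH2|t1 IH1 t2 IH2]; intros c; simpl; auto.
  - specialize (IH1 c); specialize (IH2 c); lia.
  - specialize (IH1 (S c)); specialize (IH2 c).
    pose proof (atleast1_ge1 (wocc 0 t1)).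
    assert (wocc c t2 <= atleast1 (wocc 0 t1) * wocc c t2).
    { rewrite <- (Nat.mul_1_l (wocc c t2)) at 1. apply Nat.mul_le_mono_r; lia. }
    lia.
Qed.

Lemma rs_wocc : forall c t t', rename_some c t t' ->
  (forall y, y < c -> wocc y t' = wocc y t) /\
  (forall y, c < y -> wocc (S y) t' = wocc y t) /\
  wocc c t' + wocc (S c) t' = wocc c t.
Proof.
  intros c t t' H; induction H; cbn [wocc].
  - split; [|split]; intros; nat_solve.
  - split; [|split]; intros; nat_solve.
  - split; [|split]; intros; nat_solve.
  - split; [|split]; intros; nat_solve.
  - destruct IHrename_some as [A [B C]].
    split; [|split]; intros.
    + apply A; lia.
    + apply B; lia.
    + auto.
  - destruct IHrename_some1 as [A [B C]]. destruct IHrename_some2 as [A' [B' C']].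
    split; [|split]; intros.
    + rewrite A, A'; auto.
    + rewrite B, B'; auto.
    + rewrite <- C, <- C'. lia.
  - destruct IHrename_some1 as [A [B C]]. destruct IHrename_some2 as [A' [B' C']].
    assert (E0 : wocc 0 t' = wocc 0 t) by (apply A; lia).
    rewrite E0.
    split; [|split]; intros.
    + rewrite A, A'; auto. lia.
    + rewrite B, B'; auto. lia.
    + rewrite <- C, <- C'. nia.
Qed.

Lemma rs_jweight : forall c t t', rename_some c t t' -> forall f, jweight f t' = jweight f t.
Proof.
  intros c t t' H; induction H; intros f; simpl; auto.
  assert (E0 : wocc 0 t' = wocc 0 t) by (apply (rs_wocc _ _ _ H); lia).
  rewrite E0, IHrename_some1, IHrename_some2; auto.
Qed.

Lemma pow3_lt : forall x y, 1 <= x -> 1 <= y -> 3 ^ x + 3 ^ y < 3 ^ (x + y).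
Proof.
  intros. rewrite Nat.pow_add_r.
  assert (3 <= 3 ^ x). { replace 3 with (3 ^ 1) at 1 by reflexivity. apply Nat.pow_le_mono_r; lia. }
  assert (3 <= 3 ^ y). { replace 3 with (3 ^ 1) at 1 by reflexivity. apply Nat.pow_le_mono_r; lia. }
  nia.
Qed.

Lemma jweight_superadd : forall u a b, 1 <= a -> 1 <= b -> jweight a u + jweight b u <= jweight (a + b) u.
Proof.
  induction u as [n|t IH|t1 IH1 t2 IH2|t1 IH1 t2 IH2]; intros a b Ha Hb; cbn [jweight]; auto.
  - specialize (IH1 a b Ha Hb); specialize (IH2 a b Ha Hb); lia.
  - pose proof (atleast1_ge1 (wocc 0 t1)) as Hm. set (m := atleast1 (wocc 0 t1)) in *.
    specialize (IH1 a b Ha Hb).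
    assert (1 <= a * m) by nia. assert (1 <= b * m) by nia.
    specialize (IH2 (a * m) (b * m) H H0).
    replace ((a + b) * m) with (a * m + b * m) by lia.
    pose proof (pow3_lt (a * m) (b * m) H H0). lia.
Qed.

Inductive contract_root : term -> term -> Prop :=
| contract_i : forall t t' u, occ 0 t >= 2 -> rename_some 0 t t' ->
    occ 0 t' >= 1 -> occ 1 t' >= 1 ->
    contract_root (Sub t u) (Sub (Sub t' (lift 1 0 u)) u).

(* Rule c at the root preserves [wocc] and decreases the jump weight: the
   jump of multiplicity n1 + n2 becomes two jumps of multiplicities n1, n2. *)
Lemma contract_root_weight : forall t t', contract_root t t' ->
  (forall c, wocc c t' = wocc c t) /\ (forall f, 1 <= f -> jweight f t' < jweight f t).
Proof.
  intros t0 t0' H; destruct H as [t t' u H2 Hrs H01 H11].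
  destruct (rs_wocc _ _ _ Hrs) as [A [B C]].
  pose proof (occ_le_wocc t' 0). pose proof (occ_le_wocc t' 1).
  set (n1 := wocc 0 t') in *. set (n2 := wocc 1 t') in *.
  assert (E1 : atleast1 n1 = n1) by (apply atleast1_id; lia).
  assert (E2 : atleast1 n2 = n2) by (apply atleast1_id; lia).
  assert (En : atleast1 (wocc 0 t) = n1 + n2) by (rewrite <- C; apply atleast1_id; lia).
  split.
  - intros c. cbn [wocc]. rewrite wocc_lift10, wocc_lift10_0, Nat.mul_0_r, Nat.add_0_r.
    fold n1 n2. rewrite E1, E2, En. rewrite (B (S c)) by lia. lia.
  - intros f Hf. cbn [jweight wocc]. rewrite wocc_lift10_0, Nat.mul_0_r, Nat.add_0_r.
    fold n1 n2. rewrite E1, E2, En, jweight_lift, (rs_jweight _ _ _ Hrs).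
    replace (f * (n1 + n2)) with (f * n1 + f * n2) by lia.
    assert (Q1 : 1 <= f * n1) by nia. assert (Q2 : 1 <= f * n2) by nia.
    pose proof (jweight_superadd u (f * n1) (f * n2) Q1 Q2).
    pose proof (pow3_lt (f * n1) (f * n2) Q1 Q2). lia.
Qed.

(* The same holds for c in any context, since the weight is monotone in
   every subterm. *)
Lemma contract_weight : forall t t', ctx contract_root t t' ->
  (forall c, wocc c t' = wocc c t) /\ (forall f, 1 <= f -> jweight f t' < jweight f t).
Proof.
  intros t t' H; induction H.
  - apply contract_root_weight; auto.
  - destruct IHctx as [A B]; split; intros; cbn [wocc jweight]; auto.
  - destruct IHctx as [A B]; split; intros; cbn [wocc jweight];
      [rewrite ?A; lia | specialize (B _ ltac:(eassumption)); lia].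
  - destruct IHctx as [A B]; split; intros; cbn [wocc jweight];
      [rewrite ?A; lia | specialize (B _ ltac:(eassumption)); lia].
  - destruct IHctx as [A B]; split; intros; cbn [wocc jweight]; rewrite ?A;
      [lia | specialize (B _ ltac:(eassumption)); lia].
  - destruct IHctx as [A B]; split; intros; cbn [wocc jweight]; rewrite ?A; [lia|].
    pose proof (atleast1_ge1 (wocc 0 t)).
    assert (1 <= f * atleast1 (wocc 0 t)) by nia.
    specialize (B _ H2); lia.
Qed.

Lemma wocc_swap0_0 : forall t, wocc 0 (swap 0 t) = wocc 1 t.
Proof. intros; rewrite wocc_swap; reflexivity. Qed.

Lemma wocc_swap0_1 : forall t, wocc 1 (swap 0 t) = wocc 0 t.
Proof. intros; rewrite wocc_swap; reflexivity. Qed.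

Lemma wocc_swap0_SS : forall t c, wocc (S (S c)) (swap 0 t) = wocc (S (S c)) t.
Proof. intros; rewrite wocc_swap; reflexivity. Qed.

Lemma wocc_lift11_0 : forall t, wocc 0 (lift 1 1 t) = wocc 0 t.
Proof. intros; rewrite wocc_lift; reflexivity. Qed.

Lemma wocc_lift11_1 : forall t, wocc 1 (lift 1 1 t) = 0.
Proof. intros; rewrite wocc_lift; reflexivity. Qed.

Lemma wocc_lift11_SS : forall t c, wocc (S (S c)) (lift 1 1 t) = wocc (S c) t.
Proof. intros; rewrite wocc_lift; unfold liftinv; simpl. replace (c - 0) with c by lia. reflexivity. Qed.

(* Each obox axiom preserves both measures: jumps move around but keep their
   multiplicities. *)
Lemma obox_ax_weight : forall t t', obox_ax t t' ->
  (forall c, wocc c t' = wocc c t) /\ (forall f, jweight f t' = jweight f t).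
Proof.
  intros t0 t0' H; destruct H; split; intros; cbn [wocc jweight];
    rewrite ?wocc_swap0_0, ?wocc_swap0_1, ?wocc_swap0_SS, ?wocc_lift10, ?wocc_lift10_0,
      ?wocc_lift11_0, ?wocc_lift11_1, ?wocc_lift11_SS, ?jweight_lift, ?jweight_swap,
      ?Nat.mul_0_r, ?Nat.add_0_r, ?Nat.add_0_l; try lia.
  -
    pose proof (occ_le_wocc v 0).
    rewrite (atleast1_id (wocc 0 v)) by lia.
    pose proof (atleast1_ge1 (wocc 0 t)).
    rewrite (atleast1_id (atleast1 (wocc 0 t) * wocc 0 v)) by nia. nia.
  - pose proof (occ_le_wocc v 0).
    rewrite (atleast1_id (wocc 0 v)) by lia.
    pose proof (atleast1_ge1 (wocc 0 t)).
    rewrite (atleast1_id (atleast1 (wocc 0 t) * wocc 0 v)) by nia.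
    rewrite <- Nat.mul_assoc. lia.
Qed.

Lemma ctx_obox_weight : forall t t', ctx obox_ax t t' ->
  (forall c, wocc c t' = wocc c t) /\ (forall f, jweight f t' = jweight f t).
Proof.
  intros t t' H; induction H.
  - apply obox_ax_weight; auto.
  - destruct IHctx as [A B]; split; intros; cbn [wocc jweight]; auto.
  - destruct IHctx as [A B]; split; intros; cbn [wocc jweight]; rewrite ?A, ?B; lia.
  - destruct IHctx as [A B]; split; intros; cbn [wocc jweight]; rewrite ?A, ?B; lia.
  - destruct IHctx as [A B]; split; intros; cbn [wocc jweight]; rewrite ?A, ?B; lia.
  - destruct IHctx as [A B]; split; intros; cbn [wocc jweight]; rewrite ?A, ?B; lia.
Qed.

Lemma obox_eq_weight : forall t t', obox_eq t t' ->
  (forall c, wocc c t' = wocc c t) /\ (forall f, jweight f t' = jweight f t).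
Proof.
  intros t t' H; induction H.
  - apply ctx_obox_weight; auto.
  - split; auto.
  - destruct IHclos_refl_sym_trans as [A B]; split; intros; auto.
  - destruct IHclos_refl_sym_trans1 as [A B]; destruct IHclos_refl_sym_trans2 as [A' B'].
    split; intros; congruence.
Qed.

(* Non-idempotent intersection types.  [TArr M t] takes a multiset M of
   argument types; contexts map each index to a multiset.  [typ G t T n]
   types t with T in G by a derivation of size n, and [ltyp G u L n] types
   u once with each type of the multiset L, the contexts being summed.
   Abstractions and jumps may discard part of the multiset expected for
   their bound variable (the [W] component), and an argument or jump body
   that is used zero times must still be typed once ([argl]): this is what
   makes typability imply strong normalisation of erased subterms. *)

Inductive ty : Type := TA : ty | TArr : list ty -> ty -> ty.

Definition ctxt := nat -> list ty.

Definition ceq (G H : ctxt) := forall x, Permutation (G x) (H x).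

Definition cplus (G H : ctxt) : ctxt := fun x => G x ++ H x.

Definition cempty : ctxt := fun _ => [].

Definition ccons (M : list ty) (G : ctxt) : ctxt :=
  fun x => match x with 0 => M | S y => G y end.

Definition ctl (G : ctxt) : ctxt := fun x => G (S x).

Definition csingle (x : nat) (t : ty) : ctxt := fun y => if y =? x then [t] else [].

Definition argl (M : list ty) (s : ty) := match M with [] => [s] | _ => M end.

(* The typing judgments; the last argument is the size of the derivation. *)
Inductive typ : ctxt -> term -> ty -> nat -> Prop :=
| T_var : forall G x t, ceq G (csingle x t) -> typ G (Var x) t 1
| T_lam : forall G G1 M M1 W b t n, typ (ccons M1 G1) b t n ->
    Permutation M (M1 ++ W) -> ceq G G1 ->
    typ G (Lam b) (TArr M t) (S n)
| T_app : forall G G1 G2 a b M s t n m, typ G1 a (TArr M t) n ->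
    ltyp G2 b (argl M s) m -> ceq G (cplus G1 G2) -> typ G (App a b) t (S (n + m))
| T_sub : forall G G1 G2 a b M M1 W s t n m, typ (ccons M1 G1) a t n ->
    Permutation M (M1 ++ W) ->
    ltyp G2 b (argl M s) m -> ceq G (cplus G1 G2) -> typ G (Sub a b) t (n + m)
with ltyp : ctxt -> term -> list ty -> nat -> Prop :=
| L_nil : forall G u, ceq G cempty -> ltyp G u [] 0
| L_cons : forall G G1 G2 u s M n m, typ G1 u s n -> ltyp G2 u M m ->
    ceq G (cplus G1 G2) -> ltyp G u (s :: M) (n + m).

Scheme typ_mind := Induction for typ Sort Prop
with ltyp_mind := Induction for ltyp Sort Prop.

Combined Scheme typ_ltyp_mind from typ_mind, ltyp_mind.

Lemma ceq_refl : forall G, ceq G G.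
Proof. intros G x; apply Permutation_refl. Qed.

Lemma ceq_sym : forall G H, ceq G H -> ceq H G.
Proof. intros G H E x; apply Permutation_sym; auto. Qed.

Lemma ceq_trans : forall G H K, ceq G H -> ceq H K -> ceq G K.
Proof. intros G H K E1 E2 x; eapply Permutation_trans; eauto. Qed.

Lemma cplus_ceq : forall A A' B B', ceq A A' -> ceq B B' -> ceq (cplus A B) (cplus A' B').
Proof. intros A A' B B' E1 E2 x; unfold cplus; apply Permutation_app; auto. Qed.

Lemma cplus_assoc : forall A B C, ceq (cplus (cplus A B) C) (cplus A (cplus B C)).
Proof. intros A B C x; unfold cplus; rewrite app_assoc; apply Permutation_refl. Qed.

Lemma cplus_empty_l : forall A, ceq (cplus cempty A) A.
Proof. intros A x; unfold cplus, cempty; simpl; apply Permutation_refl. Qed.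

Lemma cplus_empty_r : forall A, ceq (cplus A cempty) A.
Proof. intros A x; unfold cplus, cempty; simpl; rewrite app_nil_r; apply Permutation_refl. Qed.

Lemma ccons_ceq : forall M M' G G', Permutation M M' -> ceq G G' -> ceq (ccons M G) (ccons M' G').
Proof. intros M M' G G' E1 E2 [|x]; simpl; auto. Qed.

Lemma ccons_cplus : forall M1 M2 G1 G2,
  ceq (cplus (ccons M1 G1) (ccons M2 G2)) (ccons (M1 ++ M2) (cplus G1 G2)).
Proof. intros M1 M2 G1 G2 [|x]; apply Permutation_refl. Qed.

Lemma ccons_ctl : forall G, ceq G (ccons (G 0) (ctl G)).
Proof. intros G [|x]; apply Permutation_refl. Qed.

Lemma ctl_ceq : forall G G', ceq G G' -> ceq (ctl G) (ctl G').
Proof. intros G G' E x; apply E. Qed.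

Lemma ctl_cplus : forall A B, ceq (ctl (cplus A B)) (cplus (ctl A) (ctl B)).
Proof. intros A B x; apply Permutation_refl. Qed.

Lemma cplus_swap4 : forall A B C D, ceq (cplus (cplus A B) (cplus C D)) (cplus (cplus A C) (cplus B D)).
Proof. intros A B C D x; unfold cplus. rewrite !app_assoc. apply Permutation_app_tail.
  rewrite <- !app_assoc. apply Permutation_app_head. apply Permutation_app_comm. Qed.

Lemma typ_ceq : forall G t T n, typ G t T n -> forall G', ceq G G' -> typ G' t T n.
Proof.
  intros G t T n H G' E; destruct H.
  - constructor; eapply ceq_trans; eauto using ceq_sym.
  - econstructor; eauto. eapply ceq_trans; eauto using ceq_sym.
  - econstructor; eauto. eapply ceq_trans; eauto using ceq_sym.
  - econstructor; eauto. eapply ceq_trans; eauto using ceq_sym.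
Qed.

Lemma ltyp_ceq : forall G t L n, ltyp G t L n -> forall G', ceq G G' -> ltyp G' t L n.
Proof.
  intros G t L n H G' E; destruct H.
  - constructor; eapply ceq_trans; eauto using ceq_sym.
  - econstructor; eauto. eapply ceq_trans; eauto using ceq_sym.
Qed.

Lemma typ_size : forall G t T n, typ G t T n -> 1 <= n.
Proof. intros G t T n H; induction H; lia. Qed.

Lemma ltyp_app : forall G1 G2 u L1 L2 n1 n2, ltyp G1 u L1 n1 -> ltyp G2 u L2 n2 ->
  ltyp (cplus G1 G2) u (L1 ++ L2) (n1 + n2).
Proof.
  intros G1 G2 u L1 L2 n1 n2 H; revert G2 L2 n2; induction H; intros G2' L2 n2 H2; simpl.
  - eapply ltyp_ceq; eauto. apply ceq_sym. eapply ceq_trans; [|apply cplus_empty_l]. apply cplus_ceq; auto using ceq_refl.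
  - rewrite <- Nat.add_assoc. econstructor; eauto.
    eapply ceq_trans. apply cplus_ceq; [eauto|apply ceq_refl]. apply cplus_assoc.
Qed.

Lemma ltyp_split : forall L1 L2 G u n, ltyp G u (L1 ++ L2) n ->
  exists G1 G2 n1 n2, ltyp G1 u L1 n1 /\ ltyp G2 u L2 n2 /\ ceq G (cplus G1 G2) /\ n = n1 + n2.
Proof.
  induction L1; intros L2 G u n H; simpl in *.
  - exists cempty, G, 0, n; split; [|split; [|split]]; auto.
    constructor; apply ceq_refl.
    apply ceq_sym, cplus_empty_l.
  - inversion H; subst. apply IHL1 in H5. destruct H5 as (G3 & G4 & n3 & n4 & A & B & C & D).
    exists (cplus G1 G3), G4, (n0 + n3), n4; split; [|split; [|split]]; auto.
    + econstructor; eauto using ceq_refl.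
    + eapply ceq_trans; eauto. eapply ceq_trans. apply cplus_ceq; [apply ceq_refl|eauto].
      apply ceq_sym, cplus_assoc.
    + lia.
Qed.

Lemma ltyp_perm : forall L L', Permutation L L' -> forall G u n, ltyp G u L n -> ltyp G u L' n.
Proof.
  intros L L' P; induction P; intros G u n H; auto.
  - inversion H; subst. econstructor; eauto.
  - inversion H as [|G0 G1 G2 u0 s0 M0 n1 m1 Ha Hb Hc]; subst.
    inversion Hb as [|G0' G3 G4 u0' s0' M0' n2 m2 Ha' Hb' Hc']; subst.
    replace (n1 + (n2 + m2)) with (n2 + (n1 + m2)) by lia.
    econstructor; eauto. econstructor; eauto using ceq_refl.
    eapply ceq_trans; eauto. eapply ceq_trans. apply cplus_ceq; [apply ceq_refl|eauto].
    intro z; unfold cplus. rewrite !app_assoc. apply Permutation_app_tail, Permutation_app_comm.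
Qed.

Lemma ltyp_one : forall G u s n, ltyp G u [s] n <-> typ G u s n.
Proof.
  split; intro H.
  - inversion H; subst. inversion H5; subst. rewrite Nat.add_0_r. eapply typ_ceq; [exact H2|].
    apply ceq_sym. eapply ceq_trans; [eauto|]. eapply ceq_trans. apply cplus_ceq; [apply ceq_refl|eauto]. apply cplus_empty_r.
  - replace n with (n + 0) by lia. econstructor; eauto. constructor; apply ceq_refl.
    apply ceq_sym, cplus_empty_r.
Qed.

Lemma perm_nil_eq : forall (l : list ty), Permutation l [] -> l = [].
Proof. intros l P; apply Permutation_nil, Permutation_sym; auto. Qed.

Lemma ltyp_nil_inv : forall D u n, ltyp D u [] n -> ceq D cempty /\ n = 0.
Proof. intros D u n H; inversion H; subst; auto. Qed.

Lemma ceq_cempty_at : forall G x, ceq G cempty -> G x = [].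
Proof. intros G x E; apply perm_nil_eq, E. Qed.

Lemma perm_ne : forall (A B : list ty), Permutation A B -> A <> [] -> B <> [].
Proof. intros A B P H E; subst; apply Permutation_sym, Permutation_nil in P; auto. Qed.

Lemma app_ne_l : forall (A B : list ty), A <> [] -> A ++ B <> [].
Proof. intros [|a A] B H; simpl; [congruence|discriminate]. Qed.

Lemma argl_ne : forall M s, M <> [] -> argl M s = M.
Proof. intros [|a M] s H; simpl; auto; congruence. Qed.

Lemma argl_nonempty : forall M s, argl M s <> [].
Proof. intros [|a M] s; simpl; discriminate. Qed.

Lemma inv_lam : forall G b T n, typ G (Lam b) T n -> exists G1 M M1 W T0 n1,
  T = TArr M T0 /\ typ (ccons M1 G1) b T0 n1 /\ Permutation M (M1 ++ W) /\ ceq G G1 /\ n = S n1.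
Proof. intros. inversion H; subst. do 6 eexists; eauto. Qed.

Lemma inv_app : forall G a b T n, typ G (App a b) T n -> exists G1 G2 M s n1 m,
  typ G1 a (TArr M T) n1 /\ ltyp G2 b (argl M s) m /\ ceq G (cplus G1 G2) /\ n = S (n1 + m).
Proof. intros. inversion H; subst. do 6 eexists; eauto. Qed.

Lemma inv_sub : forall G a b T n, typ G (Sub a b) T n -> exists G1 G2 M M1 W s n1 m,
  typ (ccons M1 G1) a T n1 /\ Permutation M (M1 ++ W) /\ ltyp G2 b (argl M s) m /\
  ceq G (cplus G1 G2) /\ n = n1 + m.
Proof. intros. inversion H; subst. do 8 eexists; eauto. Qed.

Lemma inv_cons : forall G u s L n, ltyp G u (s :: L) n -> exists G1 G2 n1 m,
  typ G1 u s n1 /\ ltyp G2 u L m /\ ceq G (cplus G1 G2) /\ n = n1 + m.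
Proof. intros. inversion H; subst. do 4 eexists; eauto. Qed.

Lemma occ_typ_mut :
  (forall G t T n, typ G t T n -> forall x, occ x t <= length (G x) /\ (occ x t = 0 -> G x = [])) /\
  (forall G u L n, ltyp G u L n -> forall x, (L <> [] -> occ x u <= length (G x)) /\ (occ x u = 0 -> G x = [])).
Proof.
  apply typ_ltyp_mind.
  - intros G y T E x. pose proof (E x) as Ex. unfold csingle in Ex. simpl.
    rewrite (Permutation_length Ex).
    destruct (Nat.eqb_spec x y) as [Exy|Hne].
    + subst y. rewrite Nat.eqb_refl. simpl. split; intros; lia.
    + assert (Hy : (y =? x) = false) by (apply Nat.eqb_neq; auto). rewrite Hy. simpl.
      split; [lia|]. intros; apply perm_nil_eq; auto.
  - intros G G1 M M1 W b T n Hb IH HP E x. simpl. destruct (IH (S x)) as [A B]. simpl in A, B.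
    rewrite (Permutation_length (E x)). split; auto. intro Z. apply perm_nil_eq.
    eapply Permutation_trans; [apply E|]. rewrite B; auto.
  - intros G G1 G2 a b M s T n m Ha IHa Hb IHb E x. simpl.
    destruct (IHa x) as [A B]. destruct (IHb x) as [C D].
    rewrite (Permutation_length (E x)). unfold cplus. rewrite length_app.
    specialize (C (argl_nonempty M s)). split; [lia|].
    intro Z. apply perm_nil_eq. eapply Permutation_trans; [apply E|]. unfold cplus. rewrite B, D by lia. auto.
  - intros G G1 G2 a b M M1 W s T n m Ha IHa HP Hb IHb E x. simpl.
    destruct (IHa (S x)) as [A B]. destruct (IHb x) as [C D]. simpl in A, B.
    rewrite (Permutation_length (E x)). unfold cplus. rewrite length_app.
    specialize (C (argl_nonempty M s)). split; [lia|].
    intro Z. apply perm_nil_eq. eapply Permutation_trans; [apply E|]. unfold cplus. rewrite B, D by lia. auto.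
  - intros G u E x. split; [intro; congruence|]. intro. apply ceq_cempty_at; auto.
  - intros G G1 G2 u s L n m Ht IHt Hl IHl E x.
    destruct (IHt x) as [A B]. destruct (IHl x) as [C D].
    rewrite (Permutation_length (E x)). unfold cplus. rewrite length_app.
    split; [intro; lia|].
    intro Z. apply perm_nil_eq. eapply Permutation_trans; [apply E|]. unfold cplus. rewrite B, D by lia. auto.
Qed.

Lemma occ_typ : forall G t T n x, typ G t T n -> occ x t <= length (G x) /\ (occ x t = 0 -> G x = []).
Proof. intros; eapply occ_typ_mut; eauto. Qed.

Lemma occ_ltyp : forall G u L n x, ltyp G u L n -> L <> [] -> 1 <= occ x u -> G x <> [].
Proof.
  intros. destruct (proj2 occ_typ_mut _ _ _ _ H x) as [A _]. specialize (A H0).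
  intro E; rewrite E in A; simpl in A; lia.
Qed.

Lemma ltyp_size : forall G u L n, ltyp G u L n -> L <> [] -> 1 <= n.
Proof.
  intros. destruct L; [congruence|]. apply inv_cons in H. destruct H as (G1 & G2 & n1 & m & A & _ & _ & ->).
  apply typ_size in A. lia.
Qed.

Definition transport (ri : nat -> option nat) (G : ctxt) : ctxt :=
  fun y => match ri y with Some x => G x | None => [] end.

Lemma transport_ceq : forall ri G G', ceq G G' -> ceq (transport ri G) (transport ri G').
Proof. intros ri G G' E y; unfold transport; destruct (ri y); auto. Qed.

Lemma transport_cplus : forall ri A B, ceq (transport ri (cplus A B)) (cplus (transport ri A) (transport ri B)).
Proof. intros ri A B y; unfold transport, cplus; destruct (ri y); simpl; auto. Qed.

Lemma transport_empty : forall ri, ceq (transport ri cempty) cempty.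
Proof. intros ri y; unfold transport, cempty; destruct (ri y); simpl; auto. Qed.

Lemma transport_single : forall r ri x T, isinv r ri -> ceq (transport ri (csingle x T)) (csingle (r x) T).
Proof.
  intros r ri x T [H1 H2] y; unfold transport, csingle.
  destruct (ri y) eqn:E.
  - apply H2 in E. subst. nat_cases; auto.
    + subst; exfalso; auto.
    + exfalso. assert (Hx : ri (r n) = ri (r x)) by congruence. rewrite !H1 in Hx. congruence.
  - nat_cases; auto. subst. rewrite H1 in E; discriminate.
Qed.

Lemma transport_ccons : forall ri M G, ceq (transport (upinv ri) (ccons M G)) (ccons M (transport ri G)).
Proof. intros ri M G [|y]; unfold transport; simpl; auto. destruct (ri y); simpl; auto. Qed.

Lemma ren_typ_mut :
  (forall G t T n, typ G t T n -> forall r ri, isinv r ri -> typ (transport ri G) (ren r t) T n) /\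
  (forall G u L n, ltyp G u L n -> forall r ri, isinv r ri -> ltyp (transport ri G) (ren r u) L n).
Proof.
  apply typ_ltyp_mind; intros; simpl.
  - constructor. eapply ceq_trans. apply transport_ceq; eauto. apply transport_single; auto.
  - econstructor. eapply typ_ceq. apply H; eauto using isinv_up. apply transport_ccons. eauto.
    apply transport_ceq; auto.
  - econstructor; eauto. eapply ceq_trans. apply transport_ceq; eauto. apply transport_cplus.
  - econstructor. eapply typ_ceq. apply H; eauto using isinv_up. apply transport_ccons. eauto. eauto.
    eapply ceq_trans. apply transport_ceq; eauto. apply transport_cplus.
  - constructor. eapply ceq_trans. apply transport_ceq; eauto. apply transport_empty.
  - econstructor; eauto. eapply ceq_trans. apply transport_ceq; eauto. apply transport_cplus.
Qed.

Lemma ren_typ : forall G t T n r ri, isinv r ri -> typ G t T n -> typ (transport ri G) (ren r t) T n.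
Proof. intros; eapply ren_typ_mut; eauto. Qed.

Lemma ren_ltyp : forall G t L n r ri, isinv r ri -> ltyp G t L n -> ltyp (transport ri G) (ren r t) L n.
Proof. intros; eapply ren_typ_mut; eauto. Qed.

Definition cren (r : nat -> nat) (G : ctxt) : ctxt := fun x => G (r x).

Definition nonez (ri : nat -> option nat) (G : ctxt) := forall y, ri y = None -> G y = [].

Lemma ren_inv_ltyp_aux : forall u r ri,
  (forall G' T n, typ G' (ren r u) T n -> typ (cren r G') u T n /\ nonez ri G') ->
  forall L G' n, ltyp G' (ren r u) L n -> ltyp (cren r G') u L n /\ nonez ri G'.
Proof.
  intros u r ri IH L; induction L; intros G' n H.
  - inversion H as [G0 u0 E|]; subst. split.
    + constructor. intro x; unfold cren; exact (E _).
    + intros y _. specialize (E y). apply Permutation_sym, Permutation_nil in E; auto.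
  - inversion H as [|G0 G1 G2 u0 s M n1 m1 Ha Hb Hc]; subst.
    apply IH in Ha. apply IHL in Hb. destruct Ha as [Ha1 Ha2], Hb as [Hb1 Hb2]. split.
    + econstructor; eauto. intro x; exact (Hc _).
    + intros y E. specialize (Hc y). unfold cplus in Hc. rewrite (Ha2 y E), (Hb2 y E) in Hc.
      simpl in Hc; apply Permutation_sym, Permutation_nil in Hc; auto.
Qed.

Lemma ren_inv_typ : forall t G' T n r ri, isinv r ri -> typ G' (ren r t) T n ->
  typ (cren r G') t T n /\ nonez ri G'.
Proof.
  induction t as [k|b IH|a IHa b IHb|a IHa b IHb]; intros G' T n r ri Hi H; simpl in H.
  - inversion H as [G0 x0 t0 E| | |]; subst. split.
    + constructor. intro x. unfold cren. eapply Permutation_trans; [exact (E _)|]. unfold csingle.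
      destruct Hi as [H1 H1']. nat_cases; auto.
      all: exfalso; first [congruence | (assert (Hx : ri (r x) = ri (r k)) by congruence; rewrite !H1 in Hx; congruence)].
    + intros y E'. specialize (E y). unfold csingle in E. destruct Hi as [H1 H1'].
      revert E; nat_cases; intro E2.
      * subst. rewrite H1 in E'; discriminate.
      * simpl in E2; apply Permutation_sym, Permutation_nil in E2; auto.
  - inversion H as [|G0 G1 M M1 W b0 t0 n0 Hb HP E| |]; subst.
    apply IH with (ri := upinv ri) in Hb; [|apply isinv_up; auto]. destruct Hb as [A B]. split.
    + eapply T_lam with (G1 := cren r G1) (M1 := M1). eapply typ_ceq; [exact A|]. intros [|x]; apply Permutation_refl.
      eauto. intro x; exact (E _).
    + intros y E'. specialize (E y). assert (Hz : G1 y = []) by (apply (B (S y)); simpl; rewrite E'; auto).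
      rewrite Hz in E. apply Permutation_sym, Permutation_nil in E; auto.
  - inversion H as [| |G0 G1 G2 a0 b0 M s t0 n0 m0 Ha Hb E|]; subst.
    apply IHa with (ri := ri) in Ha; auto. destruct Ha as [A B].
    apply (ren_inv_ltyp_aux b r ri) in Hb; [|intros; apply IHb; auto]. destruct Hb as [C D]. split.
    + econstructor; eauto. intro x; exact (E _).
    + intros y E'. specialize (E y). unfold cplus in E. rewrite (B y E'), (D y E') in E.
      simpl in E; apply Permutation_sym, Permutation_nil in E; auto.
  - inversion H as [| | |G0 G1 G2 a0 b0 M M1 W s t0 n0 m0 Ha HP Hb E]; subst.
    apply IHa with (ri := upinv ri) in Ha; [|apply isinv_up; auto]. destruct Ha as [A B].
    apply (ren_inv_ltyp_aux b r ri) in Hb; [|intros; apply IHb; auto]. destruct Hb as [C D]. split.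
    + eapply T_sub with (G1 := cren r G1) (M1 := M1); eauto. eapply typ_ceq; [exact A|]. intros [|x]; apply Permutation_refl.
      intro x; exact (E _).
    + intros y E'. specialize (E y). unfold cplus in E.
      assert (Hz : G1 y = []) by (apply (B (S y)); simpl; rewrite E'; auto).
      rewrite Hz, (D y E') in E.
      simpl in E; apply Permutation_sym, Permutation_nil in E; auto.
Qed.

Lemma ren_inv_ltyp : forall u L G' n r ri, isinv r ri -> ltyp G' (ren r u) L n ->
  ltyp (cren r G') u L n /\ nonez ri G'.
Proof. intros. eapply ren_inv_ltyp_aux; eauto. intros; eapply ren_inv_typ; eauto. Qed.

Lemma ceq_pw : forall G H, (forall x, G x = H x) -> ceq G H.
Proof. intros G H E x; rewrite E; apply Permutation_refl. Qed.

Definition shift (c : nat) (D : ctxt) : ctxt := fun y => if y <? c then [] else D (y - c).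

Lemma typ_lift : forall c D u T n, typ D u T n -> typ (shift c D) (lift c 0 u) T n.
Proof.
  intros. rewrite lift_ren. eapply typ_ceq. eapply ren_typ; [apply isinv_lift|eauto].
  apply ceq_pw; intro y; unfold transport, liftinv, shift. nat_solve.
Qed.

Lemma ltyp_lift : forall c D u L n, ltyp D u L n -> ltyp (shift c D) (lift c 0 u) L n.
Proof.
  intros. rewrite lift_ren. eapply ltyp_ceq. eapply ren_ltyp; [apply isinv_lift|eauto].
  apply ceq_pw; intro y; unfold transport, liftinv, shift. nat_solve.
Qed.

Lemma typ_lift_inv : forall c G u T n, typ G (lift c 0 u) T n ->
  typ (fun x => G (x + c)) u T n /\ forall y, y < c -> G y = [].
Proof.
  intros. rewrite lift_ren in H. apply ren_inv_typ with (ri := liftinv c 0) in H; [|apply isinv_lift].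
  destruct H as [A B]. split.
  - eapply typ_ceq; eauto. apply ceq_pw; intro x; unfold cren, liftf; nat_solve.
  - intros y Hy; apply B; unfold liftinv; nat_solve.
Qed.

Lemma ltyp_lift_inv : forall c G u L n, ltyp G (lift c 0 u) L n ->
  ltyp (fun x => G (x + c)) u L n /\ forall y, y < c -> G y = [].
Proof.
  intros. rewrite lift_ren in H. apply ren_inv_ltyp with (ri := liftinv c 0) in H; [|apply isinv_lift].
  destruct H as [A B]. split.
  - eapply ltyp_ceq; eauto. apply ceq_pw; intro x; unfold cren, liftf; nat_solve.
  - intros y Hy; apply B; unfold liftinv; nat_solve.
Qed.

Lemma shift1 : forall D, ceq (shift 1 D) (ccons [] D).
Proof. intros D; apply ceq_pw; intros [|y]; unfold shift; simpl; auto. f_equal; lia. Qed.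

Lemma typ_lift1 : forall D u T n, typ D u T n -> typ (ccons [] D) (lift 1 0 u) T n.
Proof. intros; eapply typ_ceq; [apply typ_lift; eauto|apply shift1]. Qed.

Lemma ltyp_lift1 : forall D u L n, ltyp D u L n -> ltyp (ccons [] D) (lift 1 0 u) L n.
Proof. intros; eapply ltyp_ceq; [apply ltyp_lift; eauto|apply shift1]. Qed.

Lemma typ_lift1_inv : forall G u T n, typ G (lift 1 0 u) T n -> typ (ctl G) u T n /\ G 0 = [].
Proof.
  intros. apply typ_lift_inv in H. destruct H as [A B]; split; auto.
  eapply typ_ceq; eauto. apply ceq_pw; intro x; unfold ctl; f_equal; lia.
Qed.

Lemma ltyp_lift1_inv : forall G u L n, ltyp G (lift 1 0 u) L n -> ltyp (ctl G) u L n /\ G 0 = [].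
Proof.
  intros. apply ltyp_lift_inv in H. destruct H as [A B]; split; auto.
  eapply ltyp_ceq; eauto. apply ceq_pw; intro x; unfold ctl; f_equal; lia.
Qed.

Definition cins1 (G : ctxt) : ctxt := ccons (G 0) (ccons [] (ctl G)).

Lemma typ_lift11 : forall G t T n, typ G t T n -> typ (cins1 G) (lift 1 1 t) T n.
Proof.
  intros. rewrite lift_ren. eapply typ_ceq. eapply ren_typ; [apply isinv_lift|eauto].
  apply ceq_pw; intros [|[|y]]; unfold transport, liftinv, cins1, ctl; simpl; auto;
  f_equal; lia.
Qed.

Lemma typ_lift11_inv : forall G t T n, typ G (lift 1 1 t) T n ->
  typ (ccons (G 0) (ctl (ctl G))) t T n /\ G 1 = [].
Proof.
  intros. rewrite lift_ren in H. apply ren_inv_typ with (ri := liftinv 1 1) in H; [|apply isinv_lift].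
  destruct H as [A B]. split.
  - eapply typ_ceq; eauto. apply ceq_pw; intros [|x]; unfold cren, liftf, ctl; simpl; auto;
    f_equal; lia.
  - apply B; reflexivity.
Qed.

Definition cswap (G : ctxt) : ctxt := ccons (G 1) (ccons (G 0) (ctl (ctl G))).

Lemma typ_swap : forall G t T n, typ G t T n -> typ (cswap G) (swap 0 t) T n.
Proof.
  intros. rewrite swap_ren. eapply typ_ceq. eapply ren_typ; [apply isinv_swap|eauto].
  apply ceq_pw; intros [|[|y]]; reflexivity.
Qed.

Lemma typ_swap_inv : forall G t T n, typ G (swap 0 t) T n -> typ (cswap G) t T n.
Proof.
  intros. rewrite swap_ren in H. apply ren_inv_typ with (ri := swapinv 0) in H; [|apply isinv_swap].
  destruct H as [A B]. eapply typ_ceq; eauto. apply ceq_pw; intros [|[|y]]; reflexivity.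
Qed.

Definition cdel (c : nat) (G : ctxt) : ctxt := fun y => if y <? c then G y else G (S y).

Lemma cdel_ceq : forall c G G', ceq G G' -> ceq (cdel c G) (cdel c G').
Proof. intros c G G' E y; unfold cdel; destruct (y <? c); auto. Qed.

Lemma cdel_cplus : forall c A B, ceq (cdel c (cplus A B)) (cplus (cdel c A) (cdel c B)).
Proof. intros c A B y; unfold cdel, cplus; destruct (y <? c); auto. Qed.

Lemma shift_ceq : forall c G G', ceq G G' -> ceq (shift c G) (shift c G').
Proof. intros c G G' E y; unfold shift; destruct (y <? c); auto. Qed.

Lemma shift_cplus : forall c A B, ceq (shift c (cplus A B)) (cplus (shift c A) (shift c B)).
Proof. intros c A B y; unfold shift, cplus; destruct (y <? c); auto. Qed.

Lemma shift_empty : forall c, ceq (shift c cempty) cempty.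
Proof. intros c y; unfold shift, cempty; destruct (y <? c); auto. Qed.

Lemma cdel_ccons : forall c M G, ceq (cdel (S c) (ccons M G)) (ccons M (cdel c G)).
Proof. intros c M G; apply ceq_pw; intros [|y]; unfold cdel; simpl; auto; nat_solve. Qed.

Lemma shift_S : forall c D, ceq (shift (S c) D) (ccons [] (shift c D)).
Proof. intros c D; apply ceq_pw; intros [|y]; unfold shift; simpl; auto. Qed.

Lemma cdel_empty : forall c, ceq (cdel c cempty) cempty.
Proof. intros c y; unfold cdel, cempty; destruct (y <? c); auto. Qed.

Lemma subst_ctx_recombine : forall A1 A2 B1 B2 G D,
  ceq G (cplus A1 A2) -> ceq D (cplus B1 B2) -> forall c,
  ceq (cplus (cplus (cdel c A1) (shift c B1)) (cplus (cdel c A2) (shift c B2)))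
      (cplus (cdel c G) (shift c D)).
Proof.
  intros. eapply ceq_trans. apply cplus_swap4. apply cplus_ceq.
  - eapply ceq_trans. apply ceq_sym, cdel_cplus. apply cdel_ceq, ceq_sym; auto.
  - eapply ceq_trans. apply ceq_sym, shift_cplus. apply shift_ceq, ceq_sym; auto.
Qed.

Definition subst_typ_spec (u : term) (G : ctxt) (t : term) (T : ty) (n : nat) :=
  forall c D m, ltyp D u (G c) m ->
  exists n', typ (cplus (cdel c G) (shift c D)) (subst c u t) T n' /\ n' + length (G c) = n + m.

Definition subst_ltyp_spec (u : term) (G : ctxt) (t : term) (L : list ty) (n : nat) :=
  forall c D m, ltyp D u (G c) m ->
  exists n', ltyp (cplus (cdel c G) (shift c D)) (subst c u t) L n' /\ n' + length (G c) = n + m.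

Lemma subst_var_neq : forall c u x, x <> c ->
  subst c u (Var x) = Var (if c <? x then x - 1 else x).
Proof. intros c u x Hx; simpl; nat_solve. Qed.

Lemma subst_ctx_under_binder : forall c M G D,
  ceq (cplus (cdel (S c) (ccons M G)) (shift (S c) D))
      (ccons M (cplus (cdel c G) (shift c D))).
Proof.
  intros. eapply ceq_trans. apply cplus_ceq; [apply cdel_ccons|apply shift_S].
  eapply ceq_trans. apply ccons_cplus. rewrite app_nil_r. apply ceq_refl.
Qed.

Lemma subst_typ_var : forall u G x T, ceq G (csingle x T) -> subst_typ_spec u G (Var x) T 1.
Proof.
  intros u G x T E c D m H. destruct (Nat.eq_dec x c) as [-> | Hne].
  - assert (Pc : Permutation (G c) [T])
      by (specialize (E c); unfold csingle in E; rewrite Nat.eqb_refl in E; auto).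
    apply (ltyp_perm _ _ Pc), ltyp_one in H.
    exists m. split; [|rewrite (Permutation_length Pc); simpl; lia].
    simpl; rewrite Nat.eqb_refl. eapply typ_ceq. apply typ_lift; eauto.
    eapply ceq_trans; [|apply cplus_ceq; [apply ceq_sym, (cdel_ceq c _ _ E)|apply ceq_refl]].
    apply ceq_sym. eapply ceq_trans; [|apply cplus_empty_l]. apply cplus_ceq; [|apply ceq_refl].
    apply ceq_pw; intro y; unfold cdel, csingle, cempty; nat_solve.
  - assert (Gc : G c = []).
    { specialize (E c); unfold csingle in E. revert E; nat_solve. intro; apply perm_nil_eq; auto. }
    rewrite Gc in H |- *. apply ltyp_nil_inv in H. destruct H as [HD ->].
    exists 1. split; [|simpl; lia].
    rewrite subst_var_neq by auto. constructor.
    eapply ceq_trans. apply cplus_ceq; [apply cdel_ceq; eauto|apply shift_ceq; eauto].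
    eapply ceq_trans. apply cplus_ceq; [apply ceq_refl|apply shift_empty].
    eapply ceq_trans. apply cplus_empty_r.
    apply ceq_pw; intro y; unfold cdel, csingle; nat_solve.
Qed.

(* The substitution lemma, by mutual induction on the typing of t.  For a
   binary rule the multiset typing of u is split between the two premises. *)
Lemma subst_typ_mut : forall u,
  (forall G t T n, typ G t T n -> subst_typ_spec u G t T n) /\
  (forall G t L n, ltyp G t L n -> subst_ltyp_spec u G t L n).
Proof.
  intro u. apply typ_ltyp_mind.
  - apply subst_typ_var.
  - intros G G1 M M1 W b t n Hb IH HP E c D m H.
    assert (Hc : ltyp D u (ccons M1 G1 (S c)) m) by (eapply ltyp_perm; [apply E|]; auto).
    destruct (IH _ _ _ Hc) as [n' [A B]]. exists (S n'). split.
    + simpl. eapply T_lam; [eapply typ_ceq; [exact A|apply subst_ctx_under_binder]|exact HP|].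
      apply cplus_ceq; [apply cdel_ceq; auto|apply ceq_refl].
    + simpl in B. rewrite (Permutation_length (E c)). lia.
  - intros G G1 G2 a b M s t n m Ha IHa Hb IHb E c D m0 H.
    assert (Hc : ltyp D u (G1 c ++ G2 c) m0) by (eapply ltyp_perm; [apply E|]; auto).
    apply ltyp_split in Hc. destruct Hc as (D1 & D2 & m1 & m2 & H1 & H2 & HD & ->).
    destruct (IHa _ _ _ H1) as [n1 [A1 B1]]. destruct (IHb _ _ _ H2) as [n2 [A2 B2]].
    exists (S (n1 + n2)). split.
    + simpl. econstructor; eauto. apply ceq_sym, subst_ctx_recombine; auto.
    + rewrite (Permutation_length (E c)). unfold cplus. rewrite length_app. lia.
  - intros G G1 G2 a b M M1 W s t n m Ha IHa HP Hb IHb E c D m0 H.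
    assert (Hc : ltyp D u (G1 c ++ G2 c) m0) by (eapply ltyp_perm; [apply E|]; auto).
    apply ltyp_split in Hc. destruct Hc as (D1 & D2 & m1 & m2 & H1 & H2 & HD & ->).
    destruct (IHa (S c) D1 m1 H1) as [n1 [A1 B1]]. destruct (IHb _ _ _ H2) as [n2 [A2 B2]].
    exists (n1 + n2). split.
    + simpl. eapply T_sub; [eapply typ_ceq; [exact A1|apply subst_ctx_under_binder]|exact HP|exact A2|].
      apply ceq_sym, subst_ctx_recombine; auto.
    + rewrite (Permutation_length (E c)). unfold cplus. rewrite length_app. simpl in B1. lia.
  - intros G u0 E c D m H.
    rewrite (ceq_cempty_at _ c E) in H |- *. apply ltyp_nil_inv in H. destruct H as [HD ->].
    exists 0. split; [|simpl; lia].
    constructor. eapply ceq_trans. apply cplus_ceq; [apply cdel_ceq; eauto|apply shift_ceq; eauto].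
    eapply ceq_trans. apply cplus_ceq; [apply cdel_empty|apply shift_empty]. apply cplus_empty_l.
  - intros G G1 G2 u0 s M n m Ht IHt Hl IHl E c D m0 H.
    assert (Hc : ltyp D u (G1 c ++ G2 c) m0) by (eapply ltyp_perm; [apply E|]; auto).
    apply ltyp_split in Hc. destruct Hc as (D1 & D2 & m1 & m2 & H1 & H2 & HD & ->).
    destruct (IHt _ _ _ H1) as [n1 [A1 B1]]. destruct (IHl _ _ _ H2) as [n2 [A2 B2]].
    exists (n1 + n2). split.
    + econstructor; eauto. apply ceq_sym, subst_ctx_recombine; auto.
    + rewrite (Permutation_length (E c)). unfold cplus. rewrite length_app. lia.
Qed.

Lemma subst_typ : forall u G t T n c D m, typ G t T n -> ltyp D u (G c) m ->
  exists n', typ (cplus (cdel c G) (shift c D)) (subst c u t) T n' /\ n' + length (G c) = n + m.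
Proof. intros. eapply subst_typ_mut; eauto. Qed.

(* The anti-substitution lemma, converse of the substitution lemma: every
   typing of t{c/u} factors through a typing of t and a multiset typing of
   u.  This is what gives subject expansion for beta. *)

Lemma ccons_split_ceq : forall M G1 Ga Da c,
  ceq (ccons M G1) (cplus (cdel (S c) Ga) (shift (S c) Da)) ->
  Permutation M (Ga 0) /\ ceq G1 (cplus (cdel c (ctl Ga)) (shift c Da)).
Proof.
  intros M G1 Ga Da c E. split.
  - specialize (E 0). simpl in E. unfold cplus, cdel, shift in E. simpl in E. rewrite app_nil_r in E. auto.
  - intro y. specialize (E (S y)). simpl in E. eapply Permutation_trans; [exact E|].
    unfold cplus, cdel, shift, ctl. nat_solve; try apply Permutation_refl;
    replace (S y - S c) with (y - c) by lia; apply Permutation_refl.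
Qed.

Definition anti_subst (u t : term) := forall c G' T n', typ G' (subst c u t) T n' ->
  exists G D m n, typ G t T n /\ ltyp D u (G c) m /\ ceq G' (cplus (cdel c G) (shift c D)) /\
    n' + length (G c) = n + m.

Lemma anti_subst_ltyp : forall u t, anti_subst u t -> forall L c G' n', ltyp G' (subst c u t) L n' ->
  exists G D m n, ltyp G t L n /\ ltyp D u (G c) m /\ ceq G' (cplus (cdel c G) (shift c D)) /\
    n' + length (G c) = n + m.
Proof.
  intros u t HA L; induction L; intros c G' n' H.
  - apply ltyp_nil_inv in H. destruct H as [E ->].
    exists cempty, cempty, 0, 0. split; [|split; [|split]]; simpl; auto.
    + constructor; apply ceq_refl.
    + constructor; apply ceq_refl.
    + eapply ceq_trans; [exact E|]. apply ceq_sym. eapply ceq_trans.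
      apply cplus_ceq; [apply cdel_empty|apply shift_empty]. apply cplus_empty_l.
  - inversion H as [|G0 G1 G2 u0 s M n1 m1 Ha Hb Hc]; subst.
    destruct (HA _ _ _ _ Ha) as (Ga & Da & ma & na & A1 & A2 & A3 & A4).
    destruct (IHL _ _ _ Hb) as (Gb & Db & mb & nb & B1 & B2 & B3 & B4).
    exists (cplus Ga Gb), (cplus Da Db), (ma + mb), (na + nb). split; [|split; [|split]].
    + econstructor; eauto. apply ceq_refl.
    + apply ltyp_app; auto.
    + eapply ceq_trans; [exact Hc|]. eapply ceq_trans. apply cplus_ceq; eauto. apply subst_ctx_recombine; apply ceq_refl.
    + unfold cplus; rewrite length_app; lia.
Qed.

Lemma anti_subst_var : forall u x, anti_subst u (Var x).
Proof.
  intros u x c G' T n' H. destruct (Nat.eq_dec x c) as [-> | Hne].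
  - simpl in H; rewrite Nat.eqb_refl in H. apply typ_lift_inv in H. destruct H as [A B].
    exists (csingle c T), (fun y => G' (y + c)), n', 1. split; [|split; [|split]].
    + constructor; apply ceq_refl.
    + unfold csingle; rewrite Nat.eqb_refl. apply ltyp_one; auto.
    + intro y. unfold cplus, cdel, shift, csingle. nat_solve.
      all: try (rewrite B; auto; fail).
      all: try (replace (y - c + c) with y by lia; apply Permutation_refl).
    + unfold csingle; rewrite Nat.eqb_refl; simpl; lia.
  - rewrite subst_var_neq in H by auto.
    inversion H as [G0 x0 t0 E| | |]; subst.
    exists (csingle x T), cempty, 0, 1. split; [|split; [|split]].
    + constructor; apply ceq_refl.
    + unfold csingle. nat_solve. all: constructor; apply ceq_refl.
    + eapply ceq_trans; [exact E|]. intro y. unfold cplus, cdel, shift, csingle, cempty. nat_solve.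
    + unfold csingle; nat_solve.
Qed.

(* The anti-substitution lemma, by induction on t; for a binary rule the
   two multiset typings of u obtained from the premises are concatenated. *)
Lemma anti_subst_typ : forall u t, anti_subst u t.
Proof.
  intros u t; induction t as [x|b IH|a IHa b IHb|a IHa b IHb].
  - apply anti_subst_var.
  - intros c G' T n' H; simpl in H.
    inversion H as [|G0 G1 M M1 W b0 t0 n0 Hb HP E| |]; subst.
    destruct (IH _ _ _ _ Hb) as (Gb & Db & mb & nb & A1 & A2 & A3 & A4).
    apply ccons_split_ceq in A3. destruct A3 as [P1 P2].
    exists (ctl Gb), Db, mb, (S nb). split; [|split; [|split]].
    + eapply T_lam; [|exact HP|apply ceq_refl]. eapply typ_ceq; [exact A1|].
      eapply ceq_trans. apply ccons_ctl. apply ccons_ceq; [apply Permutation_sym; auto|apply ceq_refl].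
    + exact A2.
    + eapply ceq_trans; eauto.
    + unfold ctl. lia.
  - intros c G' T n' H; simpl in H.
    inversion H as [| |G0 G1 G2 a0 b0 M s t0 n0 m0 Ha Hb E|]; subst.
    destruct (IHa _ _ _ _ Ha) as (Ga & Da & ma & na & A1 & A2 & A3 & A4).
    destruct (anti_subst_ltyp u b IHb _ _ _ _ Hb) as (Gb & Db & mb & nb & B1 & B2 & B3 & B4).
    exists (cplus Ga Gb), (cplus Da Db), (ma + mb), (S (na + nb)). split; [|split; [|split]].
    + econstructor; eauto. apply ceq_refl.
    + apply ltyp_app; auto.
    + eapply ceq_trans; [exact E|]. eapply ceq_trans. apply cplus_ceq; eauto.
      apply subst_ctx_recombine; apply ceq_refl.
    + unfold cplus; rewrite length_app; lia.
  - intros c G' T n' H; simpl in H.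
    inversion H as [| | |G0 G1 G2 a0 b0 M M1 W s t0 n0 m0 Ha HP Hb E]; subst.
    destruct (IHa _ _ _ _ Ha) as (Ga & Da & ma & na & A1 & A2 & A3 & A4).
    apply ccons_split_ceq in A3. destruct A3 as [P1 P2].
    destruct (anti_subst_ltyp u b IHb _ _ _ _ Hb) as (Gb & Db & mb & nb & B1 & B2 & B3 & B4).
    exists (cplus (ctl Ga) Gb), (cplus Da Db), (ma + mb), (na + nb). split; [|split; [|split]].
    + eapply T_sub; [|exact HP|exact B1|apply ceq_refl]. eapply typ_ceq; [exact A1|].
      eapply ceq_trans. apply ccons_ctl. apply ccons_ceq; [apply Permutation_sym; auto|apply ceq_refl].
    + apply ltyp_app; auto.
    + eapply ceq_trans; [exact E|]. eapply ceq_trans. apply cplus_ceq; eauto.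
      apply subst_ctx_recombine; apply ceq_refl.
    + unfold cplus, ctl; rewrite length_app; unfold ctl in A4; lia.
Qed.

(* A term is a spine
   [apps h l] of applications to a head h that is a variable or an
   abstraction.  By well-founded induction on beta-SN (and on size for
   subterms): a variable head is typed with arrows from empty multisets,
   an abstraction head without arguments is typed from its body, and a
   beta-redex head is typed by expanding a typing of its reduct. *)

Definition typable (t : term) := exists G T p, typ G t T p.

Fixpoint apps (h : term) (l : list term) : term :=
  match l with [] => h | a :: l => apps (App h a) l end.

Lemma apps_cat : forall l1 l2 h, apps h (l1 ++ l2) = apps (apps h l1) l2.
Proof. induction l1; intros; simpl; auto. Qed.

Lemma apps_snoc : forall l h b, apps h (l ++ [b]) = App (apps h l) b.
Proof. intros; rewrite apps_cat; reflexivity. Qed.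

Lemma spine_decomp : forall t, exists h l, t = apps h l /\ (forall a b, h <> App a b).
Proof.
  induction t as [x|b IH|a IHa b IHb|a IHa b IHb].
  - exists (Var x), []; split; auto; intros; discriminate.
  - exists (Lam b), []; split; auto; intros; discriminate.
  - destruct IHa as [h [l [E N]]]. exists h, (l ++ [b]). split; auto. rewrite apps_snoc, E; auto.
  - exists (Sub a b), []; split; auto; intros; discriminate.
Qed.

Fixpoint size (t : term) : nat :=
  match t with Var _ => 1 | Lam t => S (size t) | App a b => S (size a + size b) | Sub a b => S (size a + size b) end.

Inductive subt : term -> term -> Prop :=
| st_refl : forall t, subt t t
| st_lam : forall s t, subt s t -> subt s (Lam t)
| st_appl : forall s t u, subt s t -> subt s (App t u)
| st_appr : forall s t u, subt s u -> subt s (App t u)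
| st_subl : forall s t u, subt s t -> subt s (Sub t u)
| st_subr : forall s t u, subt s u -> subt s (Sub t u).

Lemma subt_trans : forall a b c, subt a b -> subt b c -> subt a c.
Proof. intros a b c H1 H2; induction H2; auto; [apply st_lam|apply st_appl|apply st_appr|apply st_subl|apply st_subr]; auto. Qed.

Lemma subt_apps : forall l X, subt X (apps X l) /\ size X <= size (apps X l).
Proof.
  induction l; intros X; simpl; [split; auto; constructor|].
  destruct (IHl (App X a)) as [A B]. split.
  - eapply subt_trans; [|exact A]. apply st_appl, st_refl.
  - simpl in B. lia.
Qed.

Lemma in_apps : forall l h a, In a l -> subt a (apps h l) /\ size a < size (apps h l).
Proof.
  intros l h a Hin. apply in_split in Hin. destruct Hin as [l1 [l2 E]]. subst.
  rewrite apps_cat. simpl. destruct (subt_apps l2 (App (apps h l1) a)) as [A B]. split.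
  - eapply subt_trans; [|exact A]. apply st_appr, st_refl.
  - simpl in B. lia.
Qed.

Lemma pure_apps : forall l h, pure (apps h l) -> pure h /\ (forall a, In a l -> pure a).
Proof.
  induction l; intros h H; simpl in *.
  - split; auto; intros; contradiction.
  - apply IHl in H. destruct H as [[A B] C]. split; auto. intros x [->|Hx]; auto.
Qed.

Lemma pure_apps2 : forall l h, pure h -> (forall a, In a l -> pure a) -> pure (apps h l).
Proof.
  induction l; intros h H1 H2; simpl; auto.
  apply IHl; simpl; auto. split; auto. apply H2; simpl; auto.
  intros; apply H2; simpl; auto.
Qed.

Lemma ctx_apps : forall R l X Y, ctx R X Y -> ctx R (apps X l) (apps Y l).
Proof. intros R l; induction l; intros X Y H; simpl; auto. apply IHl. apply c_appl; auto. Qed.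

(* A beta-step in a subterm is a beta-step of the term, so subterms of
   beta-SN terms are reached by the induction on beta-SN. *)
Lemma subt_step : forall s t, subt s t -> forall s', beta s s' -> exists t', beta t t' /\ subt s' t'.
Proof.
  intros s t H; induction H; intros s' Hs.
  - exists s'; split; auto; constructor.
  - destruct (IHsubt _ Hs) as [t' [A B]]. exists (Lam t'); split; [apply c_lam; auto|constructor; auto].
  - destruct (IHsubt _ Hs) as [t' [A B]]. exists (App t' u); split; [apply c_appl; auto|constructor; auto].
  - destruct (IHsubt _ Hs) as [t' [A B]]. exists (App t t'); split; [apply c_appr; auto|apply st_appr; auto].
  - destruct (IHsubt _ Hs) as [t' [A B]]. exists (Sub t' u); split; [apply c_subl; auto|constructor; auto].
  - destruct (IHsubt _ Hs) as [t' [A B]]. exists (Sub t t'); split; [apply c_subr; auto|apply st_subr; auto].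
Qed.

Definition typ_expands (X Y : term) := forall G T p, typ G X T p -> exists G' p', typ G' Y T p'.

Lemma typ_expands_apps : forall l X Y, typ_expands X Y -> typ_expands (apps X l) (apps Y l).
Proof.
  induction l; intros X Y H; simpl; auto.
  apply IHl. intros G T p Ht.
  inversion Ht as [| |G0 G1 G2 a0 b0 M s t0 n0 m0 Ha Hb E|]; subst.
  destruct (H _ _ _ Ha) as [G' [p' Hy]].
  exists (cplus G' G2), (S (p' + m0)). econstructor; eauto. apply ceq_refl.
Qed.

(* Subject expansion for beta when the argument is typable: by
   anti-substitution, using the arbitrary type of [argl] if the argument is
   erased. *)
Lemma beta_expand : forall u b, typable u -> typ_expands (subst0 u b) (App (Lam b) u).
Proof.
  intros u b [Gu [Su [pu Hu]]] G T p H. unfold subst0 in H.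
  destruct (anti_subst_typ u b 0 G T p H) as (Gt & Du & m & n & A1 & A2 & A3 & A4).
  assert (HL : typ (ctl Gt) (Lam b) (TArr (Gt 0) T) (S n)).
  { eapply T_lam with (W := []); [|rewrite app_nil_r; apply Permutation_refl|apply ceq_refl]. eapply typ_ceq; eauto. apply ccons_ctl. }
  destruct (Gt 0) as [|s0 M0] eqn:EG.
  - exists (cplus (ctl Gt) Gu), (S (S n + pu)). eapply T_app with (s := Su); [exact HL| |apply ceq_refl].
    simpl. apply ltyp_one; eauto.
  - exists (cplus (ctl Gt) Du), (S (S n + m)). eapply T_app with (s := TA); [exact HL| |apply ceq_refl].
    simpl. exact A2.
Qed.

Lemma neutral_typ : forall l x, (forall a, In a l -> typable a) ->
  forall T, exists G p, typ G (apps (Var x) l) T p.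
Proof.
  induction l using rev_ind; intros x0 H T.
  - exists (csingle x0 T), 1. constructor. apply ceq_refl.
  - rewrite apps_snoc.
    destruct (IHl x0 (fun a Ha => H a (in_or_app _ _ _ (or_introl Ha))) (TArr [] T)) as [G [p Hp]].
    assert (Hin : In x (l ++ [x])) by (apply in_or_app; right; left; auto).
    destruct (H x Hin) as [Gx [Sx [px Hx]]].
    exists (cplus G Gx), (S (p + px)). eapply T_app with (s := Sx); [exact Hp| |apply ceq_refl].
    simpl. apply ltyp_one; eauto.
Qed.

Lemma lam_typable : forall c, typable c -> typable (Lam c).
Proof.
  intros c [G [T [p Hc]]]. exists (ctl G), (TArr (G 0) T), (S p).
  eapply T_lam with (W := []); [|rewrite app_nil_r; apply Permutation_refl|apply ceq_refl].
  eapply typ_ceq; eauto. apply ccons_ctl.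
Qed.

Lemma redex_spine_typable : forall c u l, typable u ->
  typable (apps (subst0 u c) l) -> typable (apps (App (Lam c) u) l).
Proof.
  intros c u l Tu [G [T [p Hty]]].
  destruct (typ_expands_apps l _ _ (beta_expand u c Tu) G T p Hty) as [G' [p' Hy]].
  exists G', T, p'; auto.
Qed.

Lemma sn_typable : forall t, SN beta t -> forall s, subt s t -> pure s -> typable s.
Proof.
  intros t H; induction H as [t _ IHt].
  assert (Main : forall n s, size s < n -> subt s t -> pure s -> typable s).
  { induction n; intros s Hs Hst Hp; [lia|].
    destruct (spine_decomp s) as [h [l [E N]]]. subst s.
    destruct (pure_apps _ _ Hp) as [Ph Pl].
    assert (Args : forall a, In a l -> typable a).
    { intros a Ha. destruct (in_apps l h a Ha) as [A B]. apply IHn; auto; [lia|].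
      eapply subt_trans; eauto. }
    destruct h as [x|c|a b|a b].
    - destruct (neutral_typ l x Args TA) as [G [p Hp']]. exists G, TA, p; auto.
    - destruct l as [|u l'].
      + simpl in *. apply lam_typable, IHn; auto; [lia|].
        eapply subt_trans; [|exact Hst]. apply st_lam, st_refl.
      + simpl in *. apply redex_spine_typable; [apply Args; auto|].
        assert (Hb : beta (apps (App (Lam c) u) l') (apps (subst0 u c) l'))
          by (apply ctx_apps, c_root; constructor).
        destruct (subt_step _ _ Hst _ Hb) as [t' [Ht' Hst']].
        apply (IHt t' Ht' _ Hst'), pure_apps2; [apply pure_subst; auto|].
        intros; apply Pl; auto.
    - exfalso; eapply N; eauto.
    - simpl in Ph; contradiction. }
  intros s Hs Hp. apply (Main (S (size s))); auto.
Qed.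

Definition subctx (G' G : ctxt) := exists R, ceq G (cplus G' R).

Lemma subctx_refl : forall G, subctx G G.
Proof. intros; exists cempty. apply ceq_sym, cplus_empty_r. Qed.

Lemma subctx_ceq : forall G G' H, subctx G' G -> ceq G H -> subctx G' H.
Proof. intros G G' H [R E] E'. exists R. eapply ceq_trans; eauto using ceq_sym. Qed.

Lemma subctx_cplus : forall A A' B B', subctx A' A -> subctx B' B -> subctx (cplus A' B') (cplus A B).
Proof.
  intros A A' B B' [R1 E1] [R2 E2]. exists (cplus R1 R2).
  eapply ceq_trans. apply cplus_ceq; eauto. apply cplus_swap4.
Qed.

Lemma subctx_ccons : forall G'' M1 G1, subctx G'' (ccons M1 G1) ->
  exists R0, Permutation M1 (G'' 0 ++ R0) /\ subctx (ctl G'') G1.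
Proof.
  intros G'' M1 G1 [R E]. exists (R 0). split.
  - apply (E 0).
  - exists (ctl R). intro x. apply (E (S x)).
Qed.

Definition typ_sim (S : nat -> nat -> Prop) (t t' : term) :=
  forall G T n, typ G t T n -> exists G' n', typ G' t' T n' /\ subctx G' G /\ S n' n.

Record size_rel (S : nat -> nat -> Prop) := {
  sr_succ : forall a b, S a b -> S (Datatypes.S a) (Datatypes.S b);
  sr_addr : forall a b c, S a b -> S (a + c) (b + c);
  sr_addl : forall a b c, S a b -> S (c + a) (c + b);
  sr_add : forall a b c d, S a b -> S c d -> S (a + c) (b + d) }.

Lemma size_rel_lt : size_rel lt.
Proof. constructor; intros; lia. Qed.

Lemma size_rel_eq : size_rel eq.
Proof. constructor; intros; lia. Qed.

Lemma sim_ltyp : forall S, size_rel S -> forall t t', typ_sim S t t' ->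
  forall L G n, ltyp G t L n -> L <> [] -> exists G' n', ltyp G' t' L n' /\ subctx G' G /\ S n' n.
Proof.
  intros S HS t t' Hsim L; induction L; intros G n H Hne; [congruence|].
  apply inv_cons in H. destruct H as (G1 & G2 & n1 & m & A & B & E & ->).
  destruct (Hsim _ _ _ A) as (G1' & n1' & A1 & A2 & A3).
  destruct L as [|b L'].
  - apply ltyp_nil_inv in B. destruct B as [EB ->].
    exists (cplus G1' cempty), (n1' + 0). split; [|split].
    + econstructor; eauto. constructor; apply ceq_refl. apply ceq_refl.
    + eapply subctx_ceq; [|apply ceq_sym; exact E]. apply subctx_cplus; auto.
      exists cempty. eapply ceq_trans; [exact EB|]. apply ceq_sym, cplus_empty_l.
    + apply (sr_addr S HS); auto.
  - destruct (IHL _ _ B ltac:(discriminate)) as (G2' & m' & B1 & B2 & B3).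
    exists (cplus G1' G2'), (n1' + m'). split; [|split].
    + econstructor; eauto. apply ceq_refl.
    + eapply subctx_ceq; [|apply ceq_sym; exact E]. apply subctx_cplus; auto.
    + apply (sr_add S HS); auto.
Qed.

Lemma sim_lam : forall S, size_rel S -> forall b b', typ_sim S b b' -> typ_sim S (Lam b) (Lam b').
Proof.
  intros S HS b b' Hsim G T n H. apply inv_lam in H.
  destruct H as (G1 & M & M1 & W & T0 & n1 & -> & Hb & HP & E & ->).
  destruct (Hsim _ _ _ Hb) as (G'' & n' & A & B & C).
  destruct (subctx_ccons _ _ _ B) as [R0 [P1 P2]].
  exists (ctl G''), (Datatypes.S n'). split; [|split].
  - eapply T_lam with (M1 := G'' 0) (W := R0 ++ W); [| |apply ceq_refl].
    + eapply typ_ceq; [exact A|apply ccons_ctl].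
    + eapply Permutation_trans; [exact HP|]. rewrite app_assoc. apply Permutation_app_tail; auto.
  - eapply subctx_ceq; eauto using ceq_sym.
  - apply (sr_succ S HS); auto.
Qed.

Lemma sim_appl : forall S, size_rel S -> forall a a' b, typ_sim S a a' -> typ_sim S (App a b) (App a' b).
Proof.
  intros S HS a a' b Hsim G T n H. apply inv_app in H.
  destruct H as (G1 & G2 & M & s & n1 & m & Ha & Hb & E & ->).
  destruct (Hsim _ _ _ Ha) as (G1' & n1' & A & B & C).
  exists (cplus G1' G2), (Datatypes.S (n1' + m)). split; [|split].
  - econstructor; eauto. apply ceq_refl.
  - eapply subctx_ceq; [|apply ceq_sym; exact E]. apply subctx_cplus; auto using subctx_refl.
  - apply (sr_succ S HS), (sr_addr S HS); auto.
Qed.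

Lemma sim_appr : forall S, size_rel S -> forall a b b', typ_sim S b b' -> typ_sim S (App a b) (App a b').
Proof.
  intros S HS a b b' Hsim G T n H. apply inv_app in H.
  destruct H as (G1 & G2 & M & s & n1 & m & Ha & Hb & E & ->).
  destruct (sim_ltyp S HS _ _ Hsim _ _ _ Hb (argl_nonempty M s)) as (G2' & m' & A & B & C).
  exists (cplus G1 G2'), (Datatypes.S (n1 + m')). split; [|split].
  - econstructor; eauto. apply ceq_refl.
  - eapply subctx_ceq; [|apply ceq_sym; exact E]. apply subctx_cplus; auto using subctx_refl.
  - apply (sr_succ S HS), (sr_addl S HS); auto.
Qed.

Lemma sim_subl : forall S, size_rel S -> forall a a' b, typ_sim S a a' -> typ_sim S (Sub a b) (Sub a' b).
Proof.
  intros S HS a a' b Hsim G T n H. apply inv_sub in H.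
  destruct H as (G1 & G2 & M & M1 & W & s & n1 & m & Ha & HP & Hb & E & ->).
  destruct (Hsim _ _ _ Ha) as (G'' & n' & A & B & C).
  destruct (subctx_ccons _ _ _ B) as [R0 [P1 P2]].
  exists (cplus (ctl G'') G2), (n' + m). split; [|split].
  - eapply T_sub with (M1 := G'' 0) (W := R0 ++ W); [| |exact Hb|apply ceq_refl].
    + eapply typ_ceq; [exact A|apply ccons_ctl].
    + eapply Permutation_trans; [exact HP|]. rewrite app_assoc. apply Permutation_app_tail; auto.
  - eapply subctx_ceq; [|apply ceq_sym; exact E]. apply subctx_cplus; auto using subctx_refl.
  - apply (sr_addr S HS); auto.
Qed.

Lemma sim_subr : forall S, size_rel S -> forall a b b', typ_sim S b b' -> typ_sim S (Sub a b) (Sub a b').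
Proof.
  intros S HS a b b' Hsim G T n H. apply inv_sub in H.
  destruct H as (G1 & G2 & M & M1 & W & s & n1 & m & Ha & HP & Hb & E & ->).
  destruct (sim_ltyp S HS _ _ Hsim _ _ _ Hb (argl_nonempty M s)) as (G2' & m' & A & B & C).
  exists (cplus G1 G2'), (n1 + m'). split; [|split].
  - eapply T_sub; eauto. apply ceq_refl.
  - eapply subctx_ceq; [|apply ceq_sym; exact E]. apply subctx_cplus; auto using subctx_refl.
  - apply (sr_addl S HS); auto.
Qed.

Lemma sim_ctx : forall S, size_rel S -> forall R : term -> term -> Prop,
  (forall t t', R t t' -> typ_sim S t t') -> forall t t', ctx R t t' -> typ_sim S t t'.
Proof.
  intros S HS R Hsim t t' H; induction H.
  - auto.
  - apply sim_lam; auto.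
  - apply sim_appl; auto.
  - apply sim_appr; auto.
  - apply sim_subl; auto.
  - apply sim_subr; auto.
Qed.

(* The root rules.  dB is checked by peeling the list of jumps through the
   obox rule for application on the left; w and d by the substitution
   lemma; c by splitting the multiset of the duplicated variable. *)

Lemma jumps_snoc : forall L t v, jumps t (L ++ [v]) = Sub (jumps t L) v.
Proof. induction L; intros; simpl; auto. Qed.

Lemma appl_fwd : forall G a s v T n, typ G (App (Sub a s) v) T n -> typ G (Sub (App a (lift 1 0 v)) s) T n.
Proof.
  intros. apply inv_app in H. destruct H as (G1 & G2 & M & r & n1 & m2 & H1 & Hv & E & ->).
  apply inv_sub in H1. destruct H1 as (H1 & H2 & K & K1 & W & r' & na & ms & Ha & HP & Hs & E1 & ->).
  replace (Datatypes.S (na + ms + m2)) with (Datatypes.S (na + m2) + ms) by lia.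
  eapply T_sub with (G1 := cplus H1 G2); [| exact HP | exact Hs |].
  - eapply T_app; [exact Ha| apply ltyp_lift1; exact Hv|].
    apply ceq_sym. eapply ceq_trans. apply ccons_cplus. rewrite app_nil_r. apply ceq_refl.
  - eapply ceq_trans; [exact E|]. eapply ceq_trans. apply cplus_ceq; [exact E1|apply ceq_refl].
    intro x; unfold cplus. rewrite <- !app_assoc. apply Permutation_app_head, Permutation_app_comm.
Qed.

Lemma appl_bwd : forall G a s v T n, typ G (Sub (App a (lift 1 0 v)) s) T n -> typ G (App (Sub a s) v) T n.
Proof.
  intros. apply inv_sub in H. destruct H as (H1 & H2 & K & K1 & W & r' & nb & ms & Hb & HP & Hs & E & ->).
  apply inv_app in Hb. destruct Hb as (A1 & A2 & M & r & na & m2 & Ha & Hv & E1 & ->).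
  apply ltyp_lift1_inv in Hv. destruct Hv as [Hv HA2].
  replace (Datatypes.S (na + m2) + ms) with (Datatypes.S (na + ms + m2)) by lia.
  eapply T_app with (G1 := cplus (ctl A1) H2) (G2 := ctl A2); [| exact Hv |].
  - eapply T_sub with (M1 := A1 0); [| | exact Hs | apply ceq_refl].
    + eapply typ_ceq; [exact Ha| apply ccons_ctl].
    + eapply Permutation_trans; [exact HP|]. apply Permutation_app_tail.
      pose proof (E1 0) as E0. unfold cplus in E0. simpl in E0. rewrite HA2, app_nil_r in E0. exact E0.
  - eapply ceq_trans; [exact E|]. intro x. pose proof (E1 (S x)) as Ex. simpl in Ex. unfold cplus, ctl in *.
    eapply Permutation_trans. apply Permutation_app_tail; exact Ex.
    rewrite <- !app_assoc. apply Permutation_app_head, Permutation_app_comm.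
Qed.

Lemma dB_sim : forall L t u, typ_sim lt (App (jumps (Lam t) L) u) (jumps (Sub t (lift (length L) 0 u)) L).
Proof.
  induction L using rev_ind; intros t u.
  - simpl. rewrite lift0. intros G T n H. apply inv_app in H.
    destruct H as (G1 & G2 & M & s & n1 & m & Ha & Hb & E & ->).
    apply inv_lam in Ha. destruct Ha as (G1' & M' & M1 & W & T0 & nb & Eq & Hb' & HP & E' & ->).
    inversion Eq; subst.
    exists G, (nb + m). split; [|split; [apply subctx_refl|lia]].
    eapply T_sub; [exact Hb'|exact HP|exact Hb|]. eapply ceq_trans; [exact E|].
    apply cplus_ceq; auto using ceq_refl.
  - rewrite !jumps_snoc, length_app. simpl.
    intros G T n H. apply appl_fwd in H. revert G T n H.
    apply sim_subl; [apply size_rel_lt|]. 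
    replace (length L + 1) with (Datatypes.S (length L)) by lia. rewrite <- (lift_lift1 u (length L)). apply IHL.
Qed.

(* Rule w strictly decreases typing size: the erased argument is typed once. *)
Lemma w_sim : forall t u, occ 0 t = 0 -> typ_sim lt (Sub t u) (subst0 u t).
Proof.
  intros t u Ho G T n H. apply inv_sub in H.
  destruct H as (G1 & G2 & M & M1 & W & s & n1 & m & Ha & HP & Hb & E & ->).
  destruct (occ_typ _ _ _ _ 0 Ha) as [_ Z]. specialize (Z Ho). simpl in Z.
  assert (Hu : ltyp cempty u (ccons M1 G1 0) 0) by (rewrite Z; constructor; apply ceq_refl).
  destruct (subst_typ u _ _ _ _ 0 _ _ Ha Hu) as [n' [A B]].
  exists (cplus (cdel 0 (ccons M1 G1)) (shift 0 cempty)), n'. split; [|split]; auto.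
  - eapply subctx_ceq; [|apply ceq_sym; exact E]. exists G2.
    apply cplus_ceq; [|apply ceq_refl]. apply ceq_sym. eapply ceq_trans. apply cplus_ceq; [apply ceq_refl|apply shift_empty].
    eapply ceq_trans. apply cplus_empty_r. apply ceq_pw; intro y; reflexivity.
  - pose proof (ltyp_size _ _ _ _ Hb (argl_nonempty M s)). simpl in B. lia.
Qed.

Lemma d_sim : forall t u, occ 0 t = 1 -> typ_sim lt (Sub t u) (subst0 u t).
Proof.
  intros t u Ho G T n H. apply inv_sub in H.
  destruct H as (G1 & G2 & M & M1 & W & s & n1 & m & Ha & HP & Hb & E & ->).
  destruct (occ_typ _ _ _ _ 0 Ha) as [Z _]. simpl in Z. rewrite Ho in Z.
  assert (NM1 : M1 <> []) by (intro EE; rewrite EE in Z; simpl in Z; lia).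
  assert (NM : M <> []) by (eapply perm_ne; [apply Permutation_sym, HP|apply app_ne_l; auto]).
  rewrite argl_ne in Hb by auto. apply (ltyp_perm _ _ HP) in Hb.
  apply ltyp_split in Hb. destruct Hb as (D1 & D2 & m1 & m2 & B1 & B2 & ED & ->).
  destruct (subst_typ u _ _ _ _ 0 _ _ Ha B1) as [n' [A B]].
  exists (cplus (cdel 0 (ccons M1 G1)) (shift 0 D1)), n'. split; [|split]; auto.
  - eapply subctx_ceq; [|apply ceq_sym; exact E]. exists D2.
    eapply ceq_trans. apply cplus_ceq; [apply ceq_refl|exact ED].
    eapply ceq_trans. apply ceq_sym, cplus_assoc. apply cplus_ceq; [|apply ceq_refl].
    apply ceq_pw; intro y; unfold cplus, cdel, shift; simpl. f_equal. f_equal. lia.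
  - simpl in B. destruct M1; [congruence|]. simpl in B. lia.
Qed.

Definition rsctx (c : nat) (G : ctxt) (A1 A2 : list ty) : ctxt :=
  fun y => if y <? c then G y else if y =? c then A1 else if y =? S c then A2 else G (y - 1).

Lemma rs_ceq : forall c G G' A1 A1' A2 A2', ceq G G' -> Permutation A1 A1' -> Permutation A2 A2' ->
  ceq (rsctx c G A1 A2) (rsctx c G' A1' A2').
Proof. intros. intro y; unfold rsctx; nat_solve; auto. Qed.

Lemma rs_cplus : forall c G1 G2 A1 A2 B1 B2,
  ceq (rsctx c (cplus G1 G2) (A1 ++ B1) (A2 ++ B2)) (cplus (rsctx c G1 A1 A2) (rsctx c G2 B1 B2)).
Proof. intros. apply ceq_pw; intro y; unfold rsctx, cplus; nat_solve; auto. Qed.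

Lemma rs_ccons : forall c M G A1 A2, ceq (rsctx (S c) (ccons M G) A1 A2) (ccons M (rsctx c G A1 A2)).
Proof.
  intros. apply ceq_pw; intros [|y]; unfold rsctx; simpl; auto.
  nat_solve; auto. destruct y; [lia|]. simpl. f_equal; lia.
Qed.

Definition rs_typ_prop (c : nat) (t t' : term) := forall G T n, typ G t T n ->
  exists A1 A2, Permutation (G c) (A1 ++ A2) /\ typ (rsctx c G A1 A2) t' T n.

Lemma perm_interleave : forall (A B A1 A2 B1 B2 : list ty),
  Permutation A (A1 ++ A2) -> Permutation B (B1 ++ B2) ->
  Permutation (A ++ B) ((A1 ++ B1) ++ (A2 ++ B2)).
Proof.
  intros A B A1 A2 B1 B2 PA PB. eapply Permutation_trans. apply Permutation_app; eauto.
  rewrite <- !app_assoc. apply Permutation_app_head.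
  rewrite !app_assoc. apply Permutation_app_tail, Permutation_app_comm.
Qed.

Lemma rs_ltyp : forall c u u', rs_typ_prop c u u' -> forall L G n, ltyp G u L n ->
  exists A1 A2, Permutation (G c) (A1 ++ A2) /\ ltyp (rsctx c G A1 A2) u' L n.
Proof.
  intros c u u' Hsim L; induction L; intros G n H.
  - apply ltyp_nil_inv in H. destruct H as [E ->]. exists [], []. split.
    + rewrite (ceq_cempty_at _ c E). auto.
    + constructor. intro y. unfold rsctx. nat_solve; try exact (E _); auto.
  - apply inv_cons in H. destruct H as (G1 & G2 & n1 & m & A & B & E & ->).
    destruct (Hsim _ _ _ A) as (A1 & A2 & P1 & T1). destruct (IHL _ _ B) as (B1 & B2 & P2 & T2).
    exists (A1 ++ B1), (A2 ++ B2). split.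
    + eapply Permutation_trans; [apply E|]. apply perm_interleave; auto.
    + econstructor; eauto. eapply ceq_trans; [|apply rs_cplus]. apply rs_ceq; auto.
Qed.

Lemma rs_typ_var : forall c x x', rename_some c (Var x) (Var x') -> rs_typ_prop c (Var x) (Var x').
Proof.
  intros c x x' Hrs G T n Ht. inversion Ht as [G0 x0 t0 EV| | |]; subst.
  assert (Ec : Permutation (G c) (if c =? x then [T] else [])) by apply (EV c).
  inversion Hrs; subst; [exists [T], [] | exists [], [T] | exists [], [] | exists [], []];
    (split; [revert Ec; nat_solve; rewrite ?app_nil_r; auto|]);
    constructor; intro y; unfold rsctx, csingle;
    pose proof (EV (y - 1)) as E1; pose proof (EV y) as E2; unfold csingle in E1, E2;
    revert E1 E2; nat_solve; auto.
Qed.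

Lemma rs_typ : forall c t t', rename_some c t t' -> rs_typ_prop c t t'.
Proof.
  intros c t t' H; induction H; try (apply rs_typ_var; constructor; auto; fail);
    intros Gx Tx nx Ht.
  - apply inv_lam in Ht. destruct Ht as (G1 & M & M1 & W & T0 & n1 & -> & Hb & HP & E & ->).
    destruct (IHrename_some _ _ _ Hb) as (A1 & A2 & P & Tb). exists A1, A2. split.
    + eapply Permutation_trans; [apply E|]. exact P.
    + eapply T_lam; [|exact HP|]. eapply typ_ceq; [exact Tb|apply rs_ccons].
      apply rs_ceq; auto.
  - apply inv_app in Ht. destruct Ht as (G1 & G2 & M & s & n1 & m & Ha & Hb & E & ->).
    destruct (IHrename_some1 _ _ _ Ha) as (A1 & A2 & P1 & T1).
    destruct (rs_ltyp _ _ _ IHrename_some2 _ _ _ Hb) as (B1 & B2 & P2 & T2).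
    exists (A1 ++ B1), (A2 ++ B2). split.
    + eapply Permutation_trans; [apply E|]. apply perm_interleave; auto.
    + econstructor; eauto. eapply ceq_trans; [|apply rs_cplus]. apply rs_ceq; auto.
  - apply inv_sub in Ht. destruct Ht as (G1 & G2 & M & M1 & W & s & n1 & m & Ha & HP & Hb & E & ->).
    destruct (IHrename_some1 _ _ _ Ha) as (A1 & A2 & P1 & T1).
    destruct (rs_ltyp _ _ _ IHrename_some2 _ _ _ Hb) as (B1 & B2 & P2 & T2).
    exists (A1 ++ B1), (A2 ++ B2). split.
    + eapply Permutation_trans; [apply E|]. apply perm_interleave; auto.
    + eapply T_sub; [|exact HP|exact T2|]. eapply typ_ceq; [exact T1|apply rs_ccons].
      eapply ceq_trans; [|apply rs_cplus]. apply rs_ceq; auto.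
Qed.

Lemma c_sim : forall t t', contract_root t t' -> typ_sim eq t t'.
Proof.
  intros t0 t0' Hc. destruct Hc as [t t' u H2 Hrs H01 H11].
  intros G T n H. apply inv_sub in H.
  destruct H as (G1 & G2 & M & M1 & W & s & n1 & m & Ha & HP & Hb & E & ->).
  destruct (rs_typ _ _ _ Hrs _ _ _ Ha) as (A1 & A2 & P & Ht').
  assert (Ht'' : typ (ccons A1 (ccons A2 G1)) t' T n1).
  { eapply typ_ceq; [exact Ht'|]. apply ceq_pw; intros [|[|y]]; unfold rsctx; simpl; auto;
    f_equal; lia. }
  destruct (occ_typ _ _ _ _ 0 Ht'') as [Z1 _]. destruct (occ_typ _ _ _ _ 1 Ht'') as [Z2 _].
  simpl in Z1, Z2.
  assert (NA1 : A1 <> []) by (intro EE; rewrite EE in Z1; simpl in Z1; lia).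
  assert (NA2 : A2 <> []) by (intro EE; rewrite EE in Z2; simpl in Z2; lia).
  assert (NM : M <> []).
  { eapply perm_ne; [apply Permutation_sym, HP|]. simpl in P. apply app_ne_l.
    eapply perm_ne; [apply Permutation_sym, P|]. apply app_ne_l; auto. }
  rewrite argl_ne in Hb by auto.
  assert (PM : Permutation M ((A1 ++ W) ++ A2)).
  { eapply Permutation_trans; [exact HP|]. simpl in P.
    eapply Permutation_trans. apply Permutation_app_tail; exact P.
    rewrite <- !app_assoc. apply Permutation_app_head, Permutation_app_comm. }
  apply (ltyp_perm _ _ PM) in Hb. apply ltyp_split in Hb.
  destruct Hb as (D1 & D2 & m1 & m2 & B1 & B2 & ED & ->).
  exists G, (n1 + m1 + m2). split; [|split; [apply subctx_refl|lia]].
  eapply T_sub with (M1 := A2) (W := []) (M := A2) (s := s) (G1 := cplus G1 D1);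
    [| rewrite app_nil_r; auto | rewrite argl_ne by auto; exact B2 |].
  - eapply T_sub with (M1 := A1) (W := W) (M := A1 ++ W) (s := s) (G1 := ccons A2 G1) (G2 := ccons [] D1);
      [exact Ht'' | auto | rewrite argl_ne by (apply app_ne_l; auto); apply ltyp_lift1; exact B1 |].
    apply ceq_sym. eapply ceq_trans. apply ccons_cplus. rewrite app_nil_r. apply ceq_refl.
  - eapply ceq_trans; [exact E|]. eapply ceq_trans. apply cplus_ceq; [apply ceq_refl|exact ED].
    apply ceq_sym, cplus_assoc.
Qed.

(* For the two rules pushing a jump into an
   argument, a jump under a multiset typing is distributed over the copies
   ([ltyp_push_jump]) or collected back ([ltyp_pull_jump]). *)

Lemma ceq_ccons_l : forall M G G', ceq (ccons M G) G' -> Permutation M (G' 0) /\ ceq G (ctl G').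
Proof. intros M G G' E. split; [apply (E 0)|intro x; apply (E (S x))]. Qed.

Lemma ceq_ccons_r : forall M G G', Permutation M (G' 0) -> ceq G (ctl G') -> ceq (ccons M G) G'.
Proof. intros M G G' P E [|x]; simpl; auto. Qed.

Lemma comm_fwd : forall G t s v T n,
  typ G (Sub (Sub t (lift 1 0 s)) v) T n -> typ G (Sub (Sub (swap 0 t) (lift 1 0 v)) s) T n.
Proof.
  intros. apply inv_sub in H.
  destruct H as (H & G2 & My & Y1 & Wy & sg & n1 & mv & Hi & HPy & Hv & E & ->).
  apply inv_sub in Hi.
  destruct Hi as (H1 & H2 & Mx & X1 & Wx & sg' & nt & ms & Ht & HPx & Hs & E1 & ->).
  apply ltyp_lift1_inv in Hs. destruct Hs as [Hs H20].
  apply ceq_ccons_l in E1. destruct E1 as [PY EH].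
  assert (PY' : Permutation Y1 (H1 0)).
  { eapply Permutation_trans; [exact PY|]. unfold cplus; rewrite H20, app_nil_r; auto. }
  apply typ_swap in Ht.
  replace (nt + ms + mv) with (nt + mv + ms) by lia.
  eapply T_sub with (M1 := X1) (G1 := cplus (ctl H1) G2); [| exact HPx | exact Hs |].
  - eapply T_sub with (M1 := H1 0) (W := Wy) (G1 := ccons X1 (ctl H1)) (G2 := ccons [] G2);
      [| | apply ltyp_lift1; exact Hv |].
    + eapply typ_ceq; [exact Ht|]. apply ceq_pw; intros [|[|y]]; reflexivity.
    + eapply Permutation_trans; [exact HPy|]. apply Permutation_app_tail; auto.
    + apply ceq_sym. eapply ceq_trans. apply ccons_cplus. rewrite app_nil_r. apply ceq_refl.
  - eapply ceq_trans; [exact E|]. eapply ceq_trans. apply cplus_ceq; [exact EH|apply ceq_refl].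
    intro x; unfold cplus, ctl. rewrite <- !app_assoc. apply Permutation_app_head, Permutation_app_comm.
Qed.

Lemma comm_bwd : forall G t s v T n,
  typ G (Sub (Sub (swap 0 t) (lift 1 0 v)) s) T n -> typ G (Sub (Sub t (lift 1 0 s)) v) T n.
Proof. intros. apply comm_fwd in H. rewrite swap_swap in H. auto. Qed.

Lemma lam_fwd : forall G t s T n,
  typ G (Lam (Sub t (lift 1 0 s))) T n -> typ G (Sub (Lam (swap 0 t)) s) T n.
Proof.
  intros. apply inv_lam in H.
  destruct H as (H & My & Y1 & Wy & T0 & n1 & -> & Hi & HPy & E & ->).
  apply inv_sub in Hi.
  destruct Hi as (H1 & H2 & Mx & X1 & Wx & sg' & nt & ms & Ht & HPx & Hs & E1 & ->).
  apply ltyp_lift1_inv in Hs. destruct Hs as [Hs H20].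
  apply ceq_ccons_l in E1. destruct E1 as [PY EH].
  assert (PY' : Permutation Y1 (H1 0)).
  { eapply Permutation_trans; [exact PY|]. unfold cplus; rewrite H20, app_nil_r; auto. }
  apply typ_swap in Ht.
  replace (Datatypes.S (nt + ms)) with (Datatypes.S nt + ms) by lia.
  eapply T_sub with (M1 := X1) (G1 := ctl H1); [| exact HPx | exact Hs |].
  - eapply T_lam with (M1 := H1 0) (W := Wy) (G1 := ccons X1 (ctl H1)); [| |apply ceq_refl].
    + eapply typ_ceq; [exact Ht|]. apply ceq_pw; intros [|[|y]]; reflexivity.
    + eapply Permutation_trans; [exact HPy|]. apply Permutation_app_tail; auto.
  - eapply ceq_trans; [exact E|]. eapply ceq_trans; [exact EH|]. apply ceq_refl.
Qed.

Lemma lam_bwd : forall G t s T n,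
  typ G (Sub (Lam (swap 0 t)) s) T n -> typ G (Lam (Sub t (lift 1 0 s))) T n.
Proof.
  intros. apply inv_sub in H.
  destruct H as (H1 & H2 & Mx & X1 & Wx & sg & nl & ms & Hl & HPx & Hs & E & ->).
  apply inv_lam in Hl.
  destruct Hl as (K & My & Y1 & Wy & T0 & nt & -> & Ht & HPy & E1 & ->).
  apply typ_swap_inv in Ht.
  assert (Ht' : typ (ccons X1 (ccons Y1 H1)) t T0 nt).
  { eapply typ_ceq; [exact Ht|]. intros [|[|y]]; simpl.
    - apply Permutation_sym. apply (E1 0).
    - apply Permutation_refl.
    - apply Permutation_sym. apply (E1 (S y)). }
  replace (Datatypes.S nt + ms) with (Datatypes.S (nt + ms)) by lia.
  eapply T_lam with (M1 := Y1) (W := Wy) (G1 := cplus H1 H2); [| exact HPy |].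
  - eapply T_sub with (M1 := X1) (G1 := ccons Y1 H1) (G2 := ccons [] H2); [exact Ht'| exact HPx | apply ltyp_lift1; exact Hs|].
    apply ceq_sym. eapply ceq_trans. apply ccons_cplus. rewrite app_nil_r. apply ceq_refl.
  - exact E.
Qed.

Lemma typ_jump_of_occ : forall B1 v u s n1 W D m, typ B1 v s n1 -> 1 <= occ 0 v ->
  ltyp D u (B1 0 ++ W) m -> typ (cplus (ctl B1) D) (Sub v u) s (n1 + m).
Proof.
  intros. destruct (occ_typ _ _ _ _ 0 H) as [Z _].
  assert (NB : B1 0 <> []) by (intro EE; rewrite EE in Z; simpl in Z; lia).
  eapply T_sub with (M1 := B1 0) (W := W) (M := B1 0 ++ W) (s := s); [| apply Permutation_refl | |apply ceq_refl].
  - eapply typ_ceq; [exact H|apply ccons_ctl].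
  - rewrite argl_ne by (apply app_ne_l; auto). exact H1.
Qed.

Lemma ltyp_push_jump : forall v u, 1 <= occ 0 v -> forall L A2 mv W Du mu, ltyp A2 v L mv -> L <> [] ->
  ltyp Du u (A2 0 ++ W) mu -> ltyp (cplus (ctl A2) Du) (Sub v u) L (mv + mu).
Proof.
  intros v u Ho L; induction L; intros A2 mv W Du mu H Hne Hu; [congruence|].
  apply inv_cons in H. destruct H as (B1 & B2 & n1 & m1 & Hv & HL & E & ->).
  destruct L as [|b L'].
  - apply ltyp_nil_inv in HL. destruct HL as [EB ->].
    assert (Hu' : ltyp Du u (B1 0 ++ W) mu).
    { eapply ltyp_perm; [|exact Hu]. apply Permutation_app_tail. eapply Permutation_trans; [apply E|].
      unfold cplus. rewrite (ceq_cempty_at _ 0 EB), app_nil_r. auto. }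
    pose proof (typ_jump_of_occ _ _ _ _ _ _ _ _ Hv Ho Hu') as C.
    replace (n1 + 0 + mu) with ((n1 + mu) + 0) by lia.
    econstructor; [exact C| constructor; apply ceq_refl|].
    eapply ceq_trans; [|apply ceq_sym, cplus_empty_r]. apply cplus_ceq; [|apply ceq_refl].
    intro x. eapply Permutation_trans; [apply (E (S x))|]. unfold cplus.
    rewrite (ceq_cempty_at _ (S x) EB), app_nil_r. auto.
  - assert (Hu' : ltyp Du u ((B1 0 ++ W) ++ (B2 0 ++ [])) mu).
    { eapply ltyp_perm; [|exact Hu]. rewrite app_nil_r. eapply Permutation_trans.
      apply Permutation_app_tail. apply (E 0). unfold cplus. rewrite <- !app_assoc.
      apply Permutation_app_head, Permutation_app_comm. }
    apply ltyp_split in Hu'. destruct Hu' as (D1 & D2 & m1' & m2' & U1 & U2 & ED & ->).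
    pose proof (typ_jump_of_occ _ _ _ _ _ _ _ _ Hv Ho U1) as C.
    pose proof (IHL _ _ _ _ _ HL ltac:(discriminate) U2) as C2.
    replace (n1 + m1 + (m1' + m2')) with ((n1 + m1') + (m1 + m2')) by lia.
    econstructor; [exact C|exact C2|].
    eapply ceq_trans. apply cplus_ceq; [apply ctl_ceq; exact E|exact ED].
    eapply ceq_trans. apply cplus_ceq; [apply ctl_cplus|apply ceq_refl]. apply cplus_swap4.
Qed.

Lemma ltyp_pull_jump : forall v u, 1 <= occ 0 v -> forall L G2 m, ltyp G2 (Sub v u) L m ->
  exists A2 Du W mv mu, ltyp A2 v L mv /\ ltyp Du u (A2 0 ++ W) mu /\
    ceq G2 (cplus (ctl A2) Du) /\ m = mv + mu.
Proof.
  intros v u Ho L; induction L; intros G2 m H.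
  - apply ltyp_nil_inv in H. destruct H as [E ->].
    exists cempty, cempty, [], 0, 0. split; [|split; [|split]].
    + constructor; apply ceq_refl.
    + constructor; apply ceq_refl.
    + eapply ceq_trans; [exact E|]. apply ceq_sym. apply cplus_empty_l.
    + auto.
  - apply inv_cons in H. destruct H as (C1 & C2 & n1 & m1 & Hc & HL & E & ->).
    apply inv_sub in Hc. destruct Hc as (B & Di & K & K1 & Wi & sg & nv & mi & Hv & HP & Hu & EC & ->).
    destruct (occ_typ _ _ _ _ 0 Hv) as [Z _]. simpl in Z.
    assert (NK1 : K1 <> []) by (intro EE; rewrite EE in Z; simpl in Z; lia).
    assert (NK : K <> []) by (eapply perm_ne; [apply Permutation_sym, HP|apply app_ne_l; auto]).
    rewrite argl_ne in Hu by auto.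
    destruct (IHL _ _ HL) as (A2' & Du' & W' & mv' & mu' & V1 & V2 & V3 & ->).
    exists (cplus (ccons K1 B) A2'), (cplus Di Du'), (Wi ++ W'), (nv + mv'), (mi + mu').
    split; [|split; [|split]].
    + econstructor; eauto. apply ceq_refl.
    + eapply ltyp_perm; [|apply ltyp_app; [apply (ltyp_perm _ _ HP); exact Hu|exact V2]].
      unfold cplus; simpl. rewrite <- !app_assoc. apply Permutation_app_head.
      rewrite !app_assoc. apply Permutation_app_tail. apply Permutation_app_comm.
    + eapply ceq_trans; [exact E|]. eapply ceq_trans. apply cplus_ceq; [exact EC|exact V3].
      eapply ceq_trans. apply cplus_swap4. apply cplus_ceq; [|apply ceq_refl].
      intro x; apply Permutation_refl.
    + lia.
Qed.

Lemma appr_fwd : forall G t v u T n, 1 <= occ 0 v ->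
  typ G (Sub (App (lift 1 0 t) v) u) T n -> typ G (App t (Sub v u)) T n.
Proof.
  intros G t v u T n Ho H. apply inv_sub in H.
  destruct H as (H1 & G2 & Mx & X1 & Wx & sg & nb & mu & Hb & HP & Hu & E & ->).
  apply inv_app in Hb. destruct Hb as (A1 & A2 & N & rho & na & mv & Ha & Hv & E1 & ->).
  apply typ_lift1_inv in Ha. destruct Ha as [Ha HA1].
  apply ceq_ccons_l in E1. destruct E1 as [PX EH].
  assert (PX' : Permutation X1 (A2 0)).
  { eapply Permutation_trans; [exact PX|]. unfold cplus; rewrite HA1; auto. }
  assert (NA : A2 0 <> []) by (eapply occ_ltyp; [exact Hv|apply argl_nonempty|exact Ho]).
  assert (NM : Mx <> []).
  { eapply perm_ne; [apply Permutation_sym, HP|]. apply app_ne_l. eapply perm_ne; [apply Permutation_sym, PX'|auto]. }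
  rewrite argl_ne in Hu by auto.
  assert (Hu' : ltyp G2 u (A2 0 ++ Wx) mu).
  { eapply ltyp_perm; [|exact Hu]. eapply Permutation_trans; [exact HP|]. apply Permutation_app_tail; auto. }
  pose proof (ltyp_push_jump v u Ho _ _ _ _ _ _ Hv (argl_nonempty N rho) Hu') as C.
  replace (Datatypes.S (na + mv) + mu) with (Datatypes.S (na + (mv + mu))) by lia.
  econstructor; [exact Ha|exact C|].
  eapply ceq_trans; [exact E|]. eapply ceq_trans. apply cplus_ceq; [exact EH|apply ceq_refl].
  eapply ceq_trans. apply cplus_ceq; [apply ctl_cplus|apply ceq_refl]. apply cplus_assoc.
Qed.

Lemma appr_bwd : forall G t v u T n, 1 <= occ 0 v ->
  typ G (App t (Sub v u)) T n -> typ G (Sub (App (lift 1 0 t) v) u) T n.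
Proof.
  intros G t v u T n Ho H. apply inv_app in H.
  destruct H as (G1 & G2 & N & rho & na & m & Ha & Hs & E & ->).
  destruct (ltyp_pull_jump v u Ho _ _ _ Hs) as (A2 & Du & W & mv & mu & V1 & V2 & V3 & ->).
  assert (NA : A2 0 <> []) by (eapply occ_ltyp; [exact V1|apply argl_nonempty|exact Ho]).
  replace (Datatypes.S (na + (mv + mu))) with (Datatypes.S (na + mv) + mu) by lia.
  eapply T_sub with (M1 := A2 0) (W := W) (M := A2 0 ++ W) (s := TA) (G1 := cplus G1 (ctl A2));
    [| apply Permutation_refl | rewrite argl_ne by (apply app_ne_l; auto); exact V2 |].
  - econstructor; [apply typ_lift1; exact Ha|exact V1|].
    apply ceq_ccons_r; [apply Permutation_refl|]. intro x; apply Permutation_refl.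
  - eapply ceq_trans; [exact E|]. eapply ceq_trans. apply cplus_ceq; [apply ceq_refl|exact V3].
    apply ceq_sym, cplus_assoc.
Qed.

Lemma box_fwd : forall G t v u T n, 1 <= occ 0 v ->
  typ G (Sub (Sub (lift 1 1 t) v) u) T n -> typ G (Sub t (Sub v u)) T n.
Proof.
  intros G t v u T n Ho H. apply inv_sub in H.
  destruct H as (H & G2 & Mx & X1 & Wx & sg & ny & mu & Hy & HPx & Hu & E & ->).
  apply inv_sub in Hy.
  destruct Hy as (K1 & K2 & My & Y1 & Wy & rho & nt & mv & Ht & HPy & Hv & E1 & ->).
  apply typ_lift11_inv in Ht. destruct Ht as [Ht HK]. simpl in HK.
  apply ceq_ccons_l in E1. destruct E1 as [PX EH].
  assert (PX' : Permutation X1 (K2 0)).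
  { eapply Permutation_trans; [exact PX|]. unfold cplus; rewrite HK; auto. }
  assert (NA : K2 0 <> []) by (eapply occ_ltyp; [exact Hv|apply argl_nonempty|exact Ho]).
  assert (NM : Mx <> []).
  { eapply perm_ne; [apply Permutation_sym, HPx|]. apply app_ne_l. eapply perm_ne; [apply Permutation_sym, PX'|auto]. }
  rewrite argl_ne in Hu by auto.
  assert (Hu' : ltyp G2 u (K2 0 ++ Wx) mu).
  { eapply ltyp_perm; [|exact Hu]. eapply Permutation_trans; [exact HPx|]. apply Permutation_app_tail; auto. }
  pose proof (ltyp_push_jump v u Ho _ _ _ _ _ _ Hv (argl_nonempty My rho) Hu') as C.
  replace (nt + mv + mu) with (nt + (mv + mu)) by lia.
  eapply T_sub with (M1 := Y1) (G1 := ctl K1); [| exact HPy | exact C |].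
  - eapply typ_ceq; [exact Ht|]. apply ceq_pw; intros [|y]; reflexivity.
  - eapply ceq_trans; [exact E|]. eapply ceq_trans. apply cplus_ceq; [exact EH|apply ceq_refl].
    eapply ceq_trans. apply cplus_ceq; [apply ctl_cplus|apply ceq_refl]. apply cplus_assoc.
Qed.

Lemma box_bwd : forall G t v u T n, 1 <= occ 0 v ->
  typ G (Sub t (Sub v u)) T n -> typ G (Sub (Sub (lift 1 1 t) v) u) T n.
Proof.
  intros G t v u T n Ho H. apply inv_sub in H.
  destruct H as (K1 & G2 & My & Y1 & Wy & rho & nt & m & Ht & HPy & Hs & E & ->).
  destruct (ltyp_pull_jump v u Ho _ _ _ Hs) as (A2 & Du & W & mv & mu & V1 & V2 & V3 & ->).
  assert (NA : A2 0 <> []) by (eapply occ_ltyp; [exact V1|apply argl_nonempty|exact Ho]).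
  replace (nt + (mv + mu)) with (nt + mv + mu) by lia.
  eapply T_sub with (M1 := A2 0) (W := W) (M := A2 0 ++ W) (s := TA) (G1 := cplus K1 (ctl A2));
    [| apply Permutation_refl | rewrite argl_ne by (apply app_ne_l; auto); exact V2 |].
  - apply typ_lift11 in Ht.
    eapply T_sub with (M1 := Y1) (G1 := ccons [] K1) (G2 := A2); [| exact HPy | exact V1 |].
    + eapply typ_ceq; [exact Ht|]. apply ceq_pw; intros [|[|y]]; reflexivity.
    + apply ceq_ccons_r; [apply Permutation_refl|]. intro x; apply Permutation_refl.
  - eapply ceq_trans; [exact E|]. eapply ceq_trans. apply cplus_ceq; [apply ceq_refl|exact V3].
    apply ceq_sym, cplus_assoc.
Qed.

Definition typ_transfer (t t' : term) := forall G T n, typ G t T n -> typ G t' T n.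

Lemma transfer_ltyp : forall t t', typ_transfer t t' -> forall L G n, ltyp G t L n -> ltyp G t' L n.
Proof.
  intros t t' HT L; induction L; intros G n H.
  - inversion H; subst; constructor; auto.
  - apply inv_cons in H. destruct H as (G1 & G2 & n1 & m & A & B & E & ->).
    econstructor; eauto.
Qed.

Lemma transfer_ctx : forall R : term -> term -> Prop, (forall a b, R a b -> typ_transfer a b) ->
  forall t t', ctx R t t' -> typ_transfer t t'.
Proof.
  intros R Hroot t t' H; induction H; intros G T n Ht.
  - eapply Hroot; eauto.
  - apply inv_lam in Ht. destruct Ht as (G1 & M & M1 & W & T0 & n1 & -> & Hb & HP & E & ->).
    econstructor; eauto.
  - apply inv_app in Ht. destruct Ht as (G1 & G2 & M & s & n1 & m & Ha & Hb & E & ->).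
    econstructor; eauto.
  - apply inv_app in Ht. destruct Ht as (G1 & G2 & M & s & n1 & m & Ha & Hb & E & ->).
    econstructor; eauto. eapply transfer_ltyp; eauto.
  - apply inv_sub in Ht. destruct Ht as (G1 & G2 & M & M1 & W & s & n1 & m & Ha & HP & Hb & E & ->).
    econstructor; eauto.
  - apply inv_sub in Ht. destruct Ht as (G1 & G2 & M & M1 & W & s & n1 & m & Ha & HP & Hb & E & ->).
    econstructor; eauto. eapply transfer_ltyp; eauto.
Qed.

Lemma ctx_flip : forall (R : term -> term -> Prop) t t', ctx R t t' -> ctx (fun a b => R b a) t' t.
Proof. intros R t t' H; induction H; try (constructor; auto; fail). Qed.

Lemma obox_ax_transfer : forall t t', obox_ax t t' -> typ_transfer t t' /\ typ_transfer t' t.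
Proof.
  intros t t' H; destruct H; split; intros G T n Ht.
  - apply comm_fwd; auto.
  - apply comm_bwd; auto.
  - apply lam_fwd; auto.
  - apply lam_bwd; auto.
  - apply appl_fwd; auto.
  - apply appl_bwd; auto.
  - apply appr_fwd; auto.
  - apply appr_bwd; auto.
  - apply box_fwd; auto.
  - apply box_bwd; auto.
Qed.

Lemma obox_eq_transfer : forall t t', obox_eq t t' -> typ_transfer t t' /\ typ_transfer t' t.
Proof.
  intros t t' H; induction H.
  - split.
    + eapply transfer_ctx; [|exact H]. intros a b Hab; exact (proj1 (obox_ax_transfer _ _ Hab)).
    + eapply transfer_ctx; [|apply ctx_flip; exact H]. intros a b Hab; exact (proj2 (obox_ax_transfer _ _ Hab)).
  - split; intros G T n Ht; auto.
  - destruct IHclos_refl_sym_trans; split; auto.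
  - destruct IHclos_refl_sym_trans1 as [A B], IHclos_refl_sym_trans2 as [C D].
    split; intros G T n Ht; auto.
Qed.

Lemma root_split : forall t t', lj_root t t' -> typ_sim lt t t' \/ contract_root t t'.
Proof.
  intros t t' H; destruct H.
  - left; apply dB_sim.
  - left; apply w_sim; auto.
  - left; apply d_sim; auto.
  - right; constructor; auto.
Qed.

Lemma step_split : forall t t', lj_step t t' -> ctx (typ_sim lt) t t' \/ ctx contract_root t t'.
Proof.
  intros t t' H; induction H.
  - destruct (root_split _ _ H); [left|right]; apply c_root; auto.
  - destruct IHctx; [left|right]; apply c_lam; auto.
  - destruct IHctx; [left|right]; apply c_appl; auto.
  - destruct IHctx; [left|right]; apply c_appr; auto.
  - destruct IHctx; [left|right]; apply c_subl; auto.
  - destruct IHctx; [left|right]; apply c_subr; auto.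
Qed.

Lemma lj_obox_decrease : forall t y G T p, lj_obox t y -> typ G t T p ->
  (exists G' p', typ G' y T p' /\ p' < p) \/
  (exists G', typ G' y T p /\ jweight 1 y < jweight 1 t).
Proof.
  intros t y G T p [t1 [t2 [E1 [St E2]]]] Ht.
  apply (proj1 (obox_eq_transfer _ _ E1)) in Ht.
  destruct (obox_eq_weight _ _ E1) as [_ W1].
  destruct (obox_eq_weight _ _ E2) as [_ W2].
  destruct (step_split _ _ St) as [C|C].
  - destruct (sim_ctx lt size_rel_lt (typ_sim lt) (fun a b h => h) _ _ C _ _ _ Ht)
      as (G' & p' & Ht2 & _ & Hlt).
    left. exists G', p'. split; auto. apply (proj1 (obox_eq_transfer _ _ E2)); auto.
  - destruct (sim_ctx eq size_rel_eq contract_root c_sim _ _ C _ _ _ Ht)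
      as (G' & p' & Ht2 & _ & ->).
    destruct (contract_weight _ _ C) as [_ Hw]. specialize (Hw 1 (le_n 1)).
    right. exists G'. split; [apply (proj1 (obox_eq_transfer _ _ E2)); auto|].
    rewrite W2, <- (W1 1). exact Hw.
Qed.

Lemma typable_SN : forall p q t G T, typ G t T p -> jweight 1 t = q -> SN lj_obox t.
Proof.
  induction p as [p IHp] using lt_wf_ind.
  induction q as [q IHq] using lt_wf_ind.
  intros t G T Ht <-. constructor. intros y Hstep.
  destruct (lj_obox_decrease _ _ _ _ _ Hstep Ht) as [(G' & p' & Hy & Hlt) | (G' & Hy & Hlt)].
  - exact (IHp p' Hlt _ y G' T Hy eq_refl).
  - exact (IHq _ Hlt y G' T Hy eq_refl).
Qed.

Theorem theorem48 : forall t : term, pure t -> SN beta t -> SN lj_obox t.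
Proof.
  intros t Hp Hsn.
  destruct (sn_typable t Hsn t (st_refl t) Hp) as [G [T [p Ht]]].
  eapply typable_SN; eauto.
Qed.
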